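(* Assume (A2), (A3) and that $V$ is irreducible. Let $n_0\in\mathcal N$ satisfy $\rho(B^{(n_0)})=\max_{n\in\mathcal N}\rho(B^{(n)})$. Then $$\psi(\rho(B^{(n_0)}))=\sup_{w\in\Pi_K^+}\inf_{p\in\mathcal P_+}G(w,p)=\inf_{p\in\mathcal P_+}\sup_{w\in\Pi_K^+}G(w,p).$$ Moreover, $(w^*,p^* )\in\Pi_K^+\times\mathcal P_+$ is a saddle point of $G$ if and only if $p^*=\bar p$ and $w^*\in\mathcal W$, where $\mathcal W=\{\sum_{n\in\mathcal N_0(\bar p)}c_nw^{(n)}: c_n\ge0,\ \sum_{n\in\mathcal N_0(\bar p)}c_n=1\}$ and, for each $n$, $w^{(n)}=y^{(n)}\circ x^{(n)}\in\Pi_K^+$ with $x^{(n)},y^{(n)}$ positive vectors satisfying $B^{(n)}x^{(n)}=\rho(B^{(n)})x^{(n)}$, $(B^{(n)})^Ty^{(n)}=\rho(B^{(n)})y^{(n)}$, $(y^{(n)})^Tx^{(n)}=1$.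
   Context: Network model: $K\ge 2$ links, $\mathcal K=\{1,\dots,K\}$. Power constraint set $\mathcal P=\{p\in\mathbb R_+^K: Cp\le\hat p\}$, where $C\in\{0,1\}^{N\times K}$ has at least one entry equal to $1$ in each column and $\hat p=(P_1,\dots,P_N)\in\mathbb R_{++}^N$; $\mathcal P_+=\mathcal P\cap\mathbb R_{++}^K$; $\mathcal N=\{1,\dots,N\}$; $c_n$ is the $n$-th row of $C$ as a column vector and $g_n(p)=c_n^Tp/P_n$. Gain matrix $V\in\mathbb R_+^{K\times K}$ with zero diagonal, noise vector $z\in\mathbb R_{++}^K$, $\mathrm{SIR}_k(p)=p_k/((Vp)_k+z_k)$. SIR targets $\gamma_k>0$, $\Gamma=\mathrm{diag}(\gamma_1,\dots,\gamma_K)$. $B^{(n)}=\Gamma V+\frac1{P_n}\Gamma z c_n^T$. $\mathcal N_0(p)=\{n\in\mathcal N: g_n(p)=\max_{m\in\mathcal N}g_m(p)=1\}$. $\bar p$ denotes the unique maximizer of $p\mapsto\min_k\mathrm{SIR}_k(p)/\gamma_k$ over $\mathcal P$. Assumption (A2): $\phi:\mathbb R_{++}\to\mathbb R$ is continuously differentiable and strictly increasing; $\mathcal Q=\phi(\mathbb R_{++})$. Assumption (A3): $\phi^{-1}:\mathcal Q\to\mathbb R_{++}$ is log-convex. $\psi(x)=-\phi(1/x)$ for $x>0$. $\Pi_K=\{x\in\mathbb R_+^K:\|x\|_1=1\}$, $\Pi_K^+=\Pi_K\cap\mathbb R_{++}^K$. $G:\Pi_K^+\times\mathcal P_+\to\mathbb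 R$, $G(w,p)=\sum_{k\in\mathcal K}w_k\psi(\gamma_k/\mathrm{SIR}_k(p))$. $\circ$ denotes the entrywise product; $\rho(\cdot)$ the spectral radius. *)

From Stdlib Require Import Reals Lra.
Open Scope R_scope.

(* Vectors in R^K are functions nat -> R (only indices < K matter);
   matrices are functions nat -> nat -> R. *)

Fixpoint rsum (n : nat) (f : nat -> R) : R :=
  match n with
  | O => 0
  | S m => rsum m f + f m
  end.

(* rmin n f = min_{k<n} f k  (n >= 1; value 0 for n = 0, never used) *)
Fixpoint rmin (n : nat) (f : nat -> R) : R :=
  match n with
  | O => 0
  | S O => f O
  | S m => Rmin (rmin m f) (f m)
  end.

Definition mxv (K : nat) (A : nat -> nat -> R) (x : nat -> R) : nat -> R :=
  fun i => rsum K (fun j => A i j * x j).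

Definition trmx (A : nat -> nat -> R) : nat -> nat -> R := fun i j => A j i.

(* complex eigenvalue (a + i b) of a real K x K matrix A, with eigenvector u + i v *)
Definition is_eigenvalue (K : nat) (A : nat -> nat -> R) (a b : R) : Prop :=
  exists u v : nat -> R,
    (exists k, (k < K)%nat /\ (u k <> 0 \/ v k <> 0)) /\
    (forall i, (i < K)%nat -> mxv K A u i = a * u i - b * v i) /\
    (forall i, (i < K)%nat -> mxv K A v i = b * u i + a * v i).

Definition is_spectral_radius (K : nat) (A : nat -> nat -> R) (r : R) : Prop :=
  (exists a b, is_eigenvalue K A a b /\ sqrt (a * a + b * b) = r) /\
  (forall a b, is_eigenvalue K A a b -> sqrt (a * a + b * b) <= r).

(* irreducibility: there is no nonempty proper subset S of {0..K-1} with
   A i j = 0 for all i not in S, j in S (i.e. A is not permutation-similar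
   to a block upper triangular matrix). *)
Definition irreducible (K : nat) (A : nat -> nat -> R) : Prop :=
  forall S : nat -> Prop,
    (exists j, (j < K)%nat /\ S j) ->
    (exists i, (i < K)%nat /\ ~ S i) ->
    exists i j, (i < K)%nat /\ (j < K)%nat /\ ~ S i /\ S j /\ A i j <> 0.

Definition SIR (K : nat) (V : nat -> nat -> R) (z : nat -> R) (p : nat -> R) (k : nat) : R :=
  p k / (mxv K V p k + z k).

Definition inP (K N : nat) (C : nat -> nat -> R) (Ph : nat -> R) (p : nat -> R) : Prop :=
  (forall k, (k < K)%nat -> 0 <= p k) /\
  (forall n, (n < N)%nat -> rsum K (fun j => C n j * p j) <= Ph n).

Definition inPplus (K N : nat) (C : nat -> nat -> R) (Ph : nat -> R) (p : nat -> R) : Prop :=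
  inP K N C Ph p /\ (forall k, (k < K)%nat -> 0 < p k).

Definition gfun (K : nat) (C : nat -> nat -> R) (Ph : nat -> R) (n : nat) (p : nat -> R) : R :=
  rsum K (fun j => C n j * p j) / Ph n.

Definition inN0 (K N : nat) (C : nat -> nat -> R) (Ph : nat -> R) (p : nat -> R) (n : nat) : Prop :=
  (n < N)%nat /\ gfun K C Ph n p = 1 /\
  (forall m, (m < N)%nat -> gfun K C Ph m p <= 1).

Definition Bmat (V : nat -> nat -> R) (z gam : nat -> R) (C : nat -> nat -> R) (Ph : nat -> R)
  (n : nat) : nat -> nat -> R :=
  fun k j => gam k * V k j + / Ph n * (gam k * z k * C n j).

Definition psi (phi : R -> R) (x : R) : R := - phi (/ x).

Definition Gfun (K : nat) (phi : R -> R) (V : nat -> nat -> R) (z gam : nat -> R)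
  (w p : nat -> R) : R :=
  rsum K (fun k => w k * psi phi (gam k / SIR K V z p k)).

Definition inPiplus (K : nat) (w : nat -> R) : Prop :=
  (forall k, (k < K)%nat -> 0 < w k) /\ rsum K w = 1.

Definition A2 (phi : R -> R) : Prop :=
  (exists dphi : R -> R,
      (forall x, 0 < x -> derivable_pt_lim phi x (dphi x)) /\
      (forall x, 0 < x -> continuity_pt dphi x)) /\
  (forall x y, 0 < x -> x < y -> phi x < phi y).

(* (A3): phi^{-1} : Q -> R_{++} is log-convex, i.e. q |-> ln(phi^{-1}(q)) is convex on
   Q = phi(R_{++}). For q1 = phi x, q2 = phi y and phi u = t q1 + (1-t) q2,
   ln u <= t ln x + (1-t) ln y. *)
Definition A3 (phi : R -> R) : Prop :=
  forall x y u t, 0 < x -> 0 < y -> 0 < u -> 0 <= t <= 1 ->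
    phi u = t * phi x + (1 - t) * phi y ->
    ln u <= t * ln x + (1 - t) * ln y.

(* sup_{a ∈ SA} inf_{b ∈ SB} F a b = v  (sup / inf in the extended reals) *)
Definition sup_inf_eq {A B : Type} (SA : A -> Prop) (SB : B -> Prop) (F : A -> B -> R) (v : R)
  : Prop :=
  (* for every a, inf_b F a b <= v *)
  (forall a, SA a -> forall eps, 0 < eps -> exists b, SB b /\ F a b < v + eps) /\
  (* for every eps, some a has inf_b F a b >= v - eps *)
  (forall eps, 0 < eps -> exists a, SA a /\ forall b, SB b -> v - eps <= F a b).

(* inf_{b ∈ SB} sup_{a ∈ SA} F a b = v  (sup / inf in the extended reals) *)
Definition inf_sup_eq {A B : Type} (SA : A -> Prop) (SB : B -> Prop) (F : A -> B -> R) (v : R)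
  : Prop :=
  (forall b, SB b -> forall eps, 0 < eps -> exists a, SA a /\ v - eps < F a b) /\
  (forall eps, 0 < eps -> exists b, SB b /\ forall a, SA a -> F a b <= v + eps).

Definition saddle_point (K N : nat) (C : nat -> nat -> R) (Ph : nat -> R)
  (G : (nat -> R) -> (nat -> R) -> R) (ws ps : nat -> R) : Prop :=
  inPiplus K ws /\ inPplus K N C Ph ps /\
  (forall w, inPiplus K w -> G w ps <= G ws ps) /\
  (forall p, inPplus K N C Ph p -> G ws ps <= G ws p).

From Stdlib Require Import Reals Lra Lia Psatz Ranalysis5 Classical ClassicalEpsilon FunctionalExtensionality.
Open Scope R_scope.

(* Let sir_opt = max_p min_k SIR_k(p) / gamma_k, attained at pbar, and
   rho_opt = 1 / sir_opt.
   1. (M-matrices.)  pbar is a positive supersolution of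
      (I - sir_opt Gamma V) p >= sir_opt Gamma z, so I - sir_opt Gamma V and
      its transpose satisfy a comparison principle and are invertible.  With
      irreducibility of V this shows that pbar is the unique max-min point
      and that it balances all normalized SIRs at sir_opt.
   2. (Spectral radii.)  pbar is a super-eigenvector of every B^(n) for
      rho_opt and an eigenvector when constraint n is tight, so by
      Collatz-Wielandt rho(B^(n)) <= rho_opt, with equality on the tight
      constraints N_0(pbar) (and some constraint is tight); hence
      rho(B^(n0)) = rho_opt.  The left Perron vectors of the tight B^(n) are
      y^(n) = (rho_opt I - V^T Gamma)^{-1} c_n.
   3. (Values.)  G(w, pbar) = psi(rho_opt) for all w, and for tight n the
      weight y^(n) o x^(n) satisfies G(y o x, p) >= psi(rho_opt) for all p,
      by the Friedland-Karlin inequality and the concavity of phi o exp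
      given by (A3).  Together with min_k SIR_k(p) / gamma_k <= sir_opt this
      gives both minimax values.
   4. (Saddle points.)  A saddle point has power pbar (step 1); minimality of
      G(ws, .) at pbar yields a first-order condition which, by Farkas' lemma
      and inverting rho_opt I - V^T Gamma, places ws in W.  Conversely every
      element of W gives a saddle point, by linearity of G in w and step 3. *)

Ltac nonzero := let H := fresh in intro H; lra.

Lemma rsum_ext n f g : (forall i, (i < n)%nat -> f i = g i) -> rsum n f = rsum n g.
Proof. induction n; simpl; intros H; auto. rewrite IHn by (intros; apply H; lia). rewrite H by lia. auto. Qed.

Lemma rsum_S n f : rsum (S n) f = rsum n f + f n.
Proof. reflexivity. Qed.

Lemma rsum_plus n f g : rsum n (fun i => f i + g i) = rsum n f + rsum n g.
Proof. induction n; simpl; [lra|]. rewrite IHn. lra. Qed.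

Lemma rsum_minus n f g : rsum n (fun i => f i - g i) = rsum n f - rsum n g.
Proof. induction n; simpl; [lra|]. rewrite IHn. lra. Qed.

Lemma rsum_scal n c f : rsum n (fun i => c * f i) = c * rsum n f.
Proof. induction n; simpl; [lra|]. rewrite IHn. lra. Qed.

Lemma rsum_scal_r n c f : rsum n (fun i => f i * c) = rsum n f * c.
Proof. induction n; simpl; [lra|]. rewrite IHn. lra. Qed.

Lemma rsum_opp n f : rsum n (fun k => - f k) = - rsum n f.
Proof. induction n; simpl; [ring|]. rewrite IHn. ring. Qed.

Lemma rsum_const n c : rsum n (fun _ => c) = INR n * c.
Proof. induction n; simpl; [ring|]. rewrite IHn. destruct n; simpl; ring. Qed.

Lemma rsum_zero n f : (forall i, (i < n)%nat -> f i = 0) -> rsum n f = 0.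
Proof. intros H. rewrite (rsum_ext n f (fun _ => 0)) by auto. induction n; simpl; auto.
 rewrite IHn; [lra|]. intros; apply H; lia. Qed.

Lemma rsum_le n f g : (forall i, (i < n)%nat -> f i <= g i) -> rsum n f <= rsum n g.
Proof. induction n; simpl; intros H; [lra|]. assert (H1:=H n ltac:(lia)).
 assert (rsum n f <= rsum n g) by (apply IHn; intros; apply H; lia). lra. Qed.

Lemma rsum_nonneg n f : (forall i, (i < n)%nat -> 0 <= f i) -> 0 <= rsum n f.
Proof. intros H. replace 0 with (rsum n (fun _ => 0)) by (apply rsum_zero; auto).
 apply rsum_le; auto. Qed.

Lemma rsum_lt n f g : (forall i, (i < n)%nat -> f i <= g i) ->
  (exists i, (i < n)%nat /\ f i < g i) -> rsum n f < rsum n g.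
Proof. induction n; simpl; intros H [i [Hi Hlt]]; [lia|].
 destruct (Nat.eq_dec i n) as [->|Hne].
 - assert (rsum n f <= rsum n g) by (apply rsum_le; intros; apply H; lia). lra.
 - assert (rsum n f < rsum n g) by (apply IHn; [intros; apply H; lia| exists i; split; [lia|auto]]).
   assert (H1:=H n ltac:(lia)). lra. Qed.

Lemma rsum_pos n f : (forall i, (i < n)%nat -> 0 <= f i) ->
  (exists i, (i < n)%nat /\ 0 < f i) -> 0 < rsum n f.
Proof. intros H H'. replace 0 with (rsum n (fun _ => 0)) by (apply rsum_zero; auto).
 apply rsum_lt; auto. Qed.

Lemma rsum_nonzero_term n f : rsum n f <> 0 -> exists i, (i < n)%nat /\ f i <> 0.
Proof.
 intros H. apply NNPP. intro Hno. apply H, rsum_zero. intros i Hi.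
 apply NNPP. intro Hfi. apply Hno. exists i. auto. Qed.

Lemma rsum_swap n m (f : nat -> nat -> R) :
  rsum n (fun i => rsum m (fun j => f i j)) = rsum m (fun j => rsum n (fun i => f i j)).
Proof. induction n; simpl.
 - symmetry; apply rsum_zero; auto.
 - rewrite IHn. rewrite <- rsum_plus. auto. Qed.

Lemma rsum_single n j a : (j < n)%nat ->
  rsum n (fun i => if Nat.eq_dec i j then a else 0) = a.
Proof. induction n; simpl; intros Hj; [lia|].
 destruct (Nat.eq_dec n j).
 - subst. rewrite rsum_zero. lra. intros i Hi. destruct (Nat.eq_dec i j); [lia|auto].
 - rewrite IHn by lia. lra. Qed.

Lemma rsum_single_f n j (f : nat -> R) : (j < n)%nat ->
  rsum n (fun i => if Nat.eq_dec i j then f i else 0) = f j.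
Proof. intros Hj. rewrite <- (rsum_single n j (f j) Hj). apply rsum_ext.
 intros i _. destruct (Nat.eq_dec i j); subst; auto. Qed.

Definition skip_index (i j : nat) : nat := if Nat.ltb j i then j else S j.

Lemma rsum_skip n i g : (i <= n)%nat ->
  rsum (S n) g = rsum n (fun j => g (skip_index i j)) + g i.
Proof. induction n; intros Hi.
 - simpl. assert (i = 0)%nat by lia. subst. lra.
 - destruct (Nat.eq_dec i (S n)) as [->|Hne].
   + change (rsum (S (S n)) g) with (rsum (S n) g + g (S n)).
     f_equal. apply rsum_ext. intros j Hj. unfold skip_index.
     destruct (Nat.ltb_spec j (S n)); [auto|lia].
   + change (rsum (S (S n)) g) with (rsum (S n) g + g (S n)).
     rewrite IHn by lia. simpl.
     replace (skip_index i n) with (S n) by (unfold skip_index; destruct (Nat.ltb_spec n i); lia). lra. Qed.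

Lemma rmin_attained n f : (1 <= n)%nat -> exists k, (k < n)%nat /\ rmin n f = f k.
Proof. induction n; intros Hn; [lia|]. destruct n.
 - exists 0%nat. split; [lia|reflexivity].
 - destruct (IHn ltac:(lia)) as [k [Hk Hr]].
   change (rmin (S (S n)) f) with (Rmin (rmin (S n) f) (f (S n))).
   unfold Rmin. destruct (Rle_dec (rmin (S n) f) (f (S n))).
   + exists k; split; [lia|auto].
   + exists (S n); split; [lia|auto]. Qed.

Lemma rmin_le n f k : (k < n)%nat -> rmin n f <= f k.
Proof. induction n; intros Hk; [lia|]. destruct n.
 - assert (k = 0)%nat by lia. subst. simpl. lra.
 - change (rmin (S (S n)) f) with (Rmin (rmin (S n) f) (f (S n))).
   destruct (Nat.eq_dec k (S n)). subst. apply Rmin_r.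
   eapply Rle_trans. apply Rmin_l. apply IHn. lia. Qed.

Lemma argmax_exists n f : (1 <= n)%nat -> exists k, (k < n)%nat /\ forall j, (j < n)%nat -> f j <= f k.
Proof. intros Hn. destruct (rmin_attained n (fun j => - f j) Hn) as [k [Hk Hr]].
 exists k. split; auto. intros j Hj. assert (H:=rmin_le n (fun j => - f j) j Hj). simpl in *. lra. Qed.

Lemma uniform_small_param N (P : nat -> R -> Prop) :
  (forall n, (n < N)%nat -> exists e, 0 < e /\ forall s, 0 < s <= e -> P n s) ->
  exists e, 0 < e /\ forall n, (n < N)%nat -> forall s, 0 < s <= e -> P n s.
Proof. induction N; intros H.
 - exists 1. split; [lra|]. intros; lia.
 - destruct IHN as [e1 [He1 H1]]. intros; apply H; lia.
   destruct (H N ltac:(lia)) as [e2 [He2 H2]].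
   exists (Rmin e1 e2). split. apply Rmin_glb_lt; auto.
   intros n Hn s Hs. assert (Rmin e1 e2 <= e1) by apply Rmin_l. assert (Rmin e1 e2 <= e2) by apply Rmin_r.
   destruct (Nat.eq_dec n N). subst. apply H2; lra. apply H1; [lia|lra]. Qed.

Lemma mxv_plus K A x y i : mxv K A (fun j => x j + y j) i = mxv K A x i + mxv K A y i.
Proof. unfold mxv. rewrite <- rsum_plus. apply rsum_ext; intros; ring. Qed.

Lemma mxv_scal K A c x i : mxv K A (fun j => c * x j) i = c * mxv K A x i.
Proof. unfold mxv. rewrite <- rsum_scal. apply rsum_ext; intros; ring. Qed.

Lemma mxv_ext K A x y i : (forall j, (j < K)%nat -> x j = y j) -> mxv K A x i = mxv K A y i.
Proof. intros H; unfold mxv; apply rsum_ext; intros; rewrite H; auto. Qed.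

Lemma mxv_id_minus K (A : nat -> nat -> R) x i : (i < K)%nat ->
  mxv K (fun i j => (if Nat.eq_dec i j then 1 else 0) - A i j) x i = x i - mxv K A x i.
Proof. intros Hi. unfold mxv.
 rewrite (rsum_ext _ _ (fun j => (if Nat.eq_dec j i then x j else 0) - A i j * x j)).
 rewrite rsum_minus, rsum_single_f; auto.
 intros j Hj. destruct (Nat.eq_dec i j); destruct (Nat.eq_dec j i); subst; try lia; ring. Qed.

Definition insert_at (i : nat) (a : R) (lam : nat -> R) (j : nat) : R :=
  if Nat.eq_dec j i then a else lam (if Nat.ltb j i then j else pred j).

Lemma insert_at_skip i a lam j : insert_at i a lam (skip_index i j) = lam j.
Proof.
 unfold insert_at, skip_index. destruct (Nat.ltb_spec j i).
 - destruct (Nat.eq_dec j i); [lia|]. destruct (Nat.ltb_spec j i); [reflexivity|lia].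
 - destruct (Nat.eq_dec (S j) i); [lia|]. destruct (Nat.ltb_spec (S j) i); [lia|reflexivity].
Qed.

Lemma insert_at_self i a lam : insert_at i a lam i = a.
Proof. unfold insert_at. destruct (Nat.eq_dec i i); [reflexivity|lia]. Qed.

(* Any n+1 vectors of R^n are linearly dependent (Gaussian elimination of the last
   coordinate). *)
Lemma vectors_dependent n : forall v : nat -> nat -> R,
  exists lam : nat -> R, (exists j, (j <= n)%nat /\ lam j <> 0) /\
    forall k, (k < n)%nat -> rsum (S n) (fun j => lam j * v j k) = 0.
Proof.
 induction n; intros v.
 - exists (fun _ => 1). split; [exists 0%nat; split; [lia|lra]|]. intros; lia.
 - destruct (classic (exists i, (i <= S n)%nat /\ v i n <> 0)) as [[i [Hi Hv]]|Hno].
   + (* eliminate the last coordinate using the vector v i, then recurse on the others *)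
     set (w := fun j k => v (skip_index i j) k - (v (skip_index i j) n / v i n) * v i k).
     destruct (IHn w) as [lam [[j0 [Hj0 Hl0]] Hs]].
     set (a := - rsum (S n) (fun l => lam l * (v (skip_index i l) n / v i n))).
     exists (insert_at i a lam). split.
     * exists (skip_index i j0). rewrite insert_at_skip.
       split; [unfold skip_index; destruct (Nat.ltb_spec j0 i); lia | exact Hl0].
     * intros k Hk. rewrite (rsum_skip (S n) i) by lia.
       rewrite (rsum_ext _ _ (fun j => lam j * v (skip_index i j) k))
         by (intros; rewrite insert_at_skip; reflexivity).
       rewrite insert_at_self. unfold a. rewrite <- Ropp_mult_distr_l, <- rsum_scal_r.
       replace (rsum (S n) (fun j => lam j * v (skip_index i j) k)
                + - rsum (S n) (fun j => lam j * (v (skip_index i j) n / v i n) * v i k))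
         with (rsum (S n) (fun j => lam j * v (skip_index i j) k
                                     - lam j * (v (skip_index i j) n / v i n) * v i k))
         by (rewrite rsum_minus; ring).
       destruct (Nat.eq_dec k n) as [->|Hkn].
       -- apply rsum_zero. intros. field. exact Hv.
       -- rewrite <- (Hs k ltac:(lia)). apply rsum_ext. intros. unfold w. ring.
   + (* the last coordinate vanishes identically: recurse and pad with a zero *)
     destruct (IHn v) as [lam [[j0 [Hj0 Hl0]] Hs]].
     exists (insert_at (S n) 0 lam). split.
     * exists j0. rewrite <- (insert_at_skip (S n) 0 lam j0) in Hl0.
       unfold skip_index in Hl0. destruct (Nat.ltb_spec j0 (S n)); [|lia].
       split; [lia | exact Hl0].
     * intros k Hk. rewrite rsum_S, insert_at_self, Rmult_0_l, Rplus_0_r.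
       rewrite (rsum_ext _ _ (fun j => lam j * v j k)).
       -- destruct (Nat.eq_dec k n) as [->|Hkn].
          ++ apply rsum_zero. intros j Hj. assert (Hvj : v j n = 0).
             { apply NNPP; intro; apply Hno; exists j; split; [lia|auto]. }
             rewrite Hvj. ring.
          ++ apply Hs. lia.
       -- intros j Hj. rewrite <- (insert_at_skip (S n) 0 lam j). unfold skip_index.
          destruct (Nat.ltb_spec j (S n)); [reflexivity|lia].
Qed.

Lemma surjective_of_injective K (A : nat -> nat -> R) :
  (forall x, (forall i, (i < K)%nat -> mxv K A x i = 0) -> forall i, (i < K)%nat -> x i = 0) ->
  forall b, exists x, forall i, (i < K)%nat -> mxv K A x i = b i.
Proof.
 intros Hinj b.
 destruct (vectors_dependent K (fun j k => if Nat.ltb j K then A k j else b k)) as [lam [[j0 [Hj0 Hl0]] Hs]].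
 assert (Hs' : forall k, (k < K)%nat -> mxv K A lam k + lam K * b k = 0).
 { intros k Hk. rewrite <- (Hs k Hk). simpl. unfold mxv. f_equal.
   apply rsum_ext. intros j Hj. destruct (Nat.ltb_spec j K); [ring|lia].
   destruct (Nat.ltb_spec K K); [lia|auto]. }
 destruct (Req_dec (lam K) 0) as [HK|HK].
 - exfalso. assert (forall i, (i < K)%nat -> lam i = 0).
   { apply Hinj. intros i Hi. rewrite <- (Hs' i Hi), HK. ring. }
   destruct (Nat.eq_dec j0 K). subst; auto. apply Hl0, H. lia.
 - exists (fun j => - lam j / lam K). intros i Hi.
   replace (fun j => - lam j / lam K) with (fun j => (- / lam K) * lam j)
     by (apply functional_extensionality; intros; field; auto).
   rewrite mxv_scal. specialize (Hs' i Hi). field_simplify; auto.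
   replace (mxv K A lam i) with (- (lam K * b i)) by lra. field. auto.
Qed.

Definition dot K (u v : nat -> R) := rsum K (fun k => u k * v k).

Lemma dot_lin_l K a u b v w : dot K (fun k => a * u k + b * v k) w = a * dot K u w + b * dot K v w.
Proof. unfold dot. rewrite <- !rsum_scal, <- rsum_plus. apply rsum_ext; intros; ring. Qed.

Lemma dot_lin_r K w a u b v : dot K w (fun k => a * u k + b * v k) = a * dot K w u + b * dot K w v.
Proof. unfold dot. rewrite <- !rsum_scal, <- rsum_plus. apply rsum_ext; intros; ring. Qed.

(* The Farkas induction projects every vector u onto the hyperplane orthogonal to [d]
   along [am]: [(am.d) u - (u.d) am] is orthogonal to [d]. *)
Definition farkas_proj K (am d u : nat -> R) : nat -> R :=
  fun k => dot K am d * u k - dot K u d * am k.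

Lemma dot_farkas_proj K am d u v :
  dot K (farkas_proj K am d u) v = dot K am d * dot K u v - dot K u d * dot K am v.
Proof.
  unfold farkas_proj.
  replace (fun k => dot K am d * u k - dot K u d * am k)
    with (fun k => dot K am d * u k + (- dot K u d) * am k)
    by (apply functional_extensionality; intros; ring).
  rewrite dot_lin_l. ring.
Qed.

(* Induction step of Farkas' lemma, first case: a conic representation of the
   projected [b] by the projected [a i] lifts to one of [b] by [a 0..m]. *)
Lemma farkas_step_combination K m (a : nat -> nat -> R) b d mu :
  0 < dot K (a m) d -> (forall i, (i < m)%nat -> dot K (a i) d <= 0) -> 0 < dot K b d ->
  (forall i, (i < m)%nat -> 0 <= mu i) ->
  (forall k, (k < K)%nat ->
     farkas_proj K (a m) d b k = rsum m (fun i => mu i * farkas_proj K (a m) d (a i) k)) ->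
  exists lam, (forall i, (i < S m)%nat -> 0 <= lam i) /\
    forall k, (k < K)%nat -> b k = rsum (S m) (fun i => lam i * a i k).
Proof.
  intros Hal Hd Hbd Hmu Hb'. set (al := dot K (a m) d) in *.
  set (lm := (dot K b d - rsum m (fun i => mu i * dot K (a i) d)) / al).
  assert (Hs0 : rsum m (fun i => mu i * dot K (a i) d) <= 0).
  { rewrite <- (rsum_zero m (fun _ => 0)) by auto. apply rsum_le. intros i Hi.
    assert (H1 := Hmu i Hi). assert (H2 := Hd i Hi).
    assert (0 <= mu i * - dot K (a i) d) by (apply Rmult_le_pos; lra). lra. }
  exists (fun i => if Nat.eq_dec i m then lm else mu i). split.
  - intros i Hi. destruct (Nat.eq_dec i m).
    + unfold lm, Rdiv. apply Rmult_le_pos; [lra | left; apply Rinv_0_lt_compat; exact Hal].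
    + apply Hmu; lia.
  - intros k Hk. rewrite rsum_S. destruct (Nat.eq_dec m m) as [_|]; [|lia].
    rewrite (rsum_ext _ _ (fun i => mu i * a i k))
      by (intros i Hi; destruct (Nat.eq_dec i m); [lia|reflexivity]).
    specialize (Hb' k Hk). unfold farkas_proj in Hb'. fold al in Hb'.
    rewrite (rsum_ext _ _ (fun i => al * (mu i * a i k) - mu i * dot K (a i) d * a m k)) in Hb'
      by (intros; ring).
    rewrite rsum_minus, rsum_scal, rsum_scal_r in Hb'.
    apply (Rmult_eq_reg_l al); [|nonzero]. unfold lm. field_simplify; [lra | nonzero].
Qed.

(* Induction step of Farkas' lemma, second case: a separating direction for the
   projected system yields one for the original system. *)
Lemma farkas_step_direction K m (a : nat -> nat -> R) b d d' :
  0 < dot K (a m) d ->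
  (forall i, (i < m)%nat -> dot K (farkas_proj K (a m) d (a i)) d' <= 0) ->
  0 < dot K (farkas_proj K (a m) d b) d' ->
  exists e, (forall i, (i < S m)%nat -> dot K (a i) e <= 0) /\ 0 < dot K b e.
Proof.
  intros Hal Hd' Hbd'. rewrite dot_farkas_proj in Hbd'.
  set (al := dot K (a m) d) in *.
  set (c := dot K (a m) d' / al).
  exists (fun k => 1 * d' k + (- c) * d k).
  assert (Hval : forall u, dot K u (fun k => 1 * d' k + - c * d k)
                           = (al * dot K u d' - dot K u d * dot K (a m) d') / al).
  { intros u. rewrite dot_lin_r. unfold c. field. nonzero. }
  split.
  - intros i Hi. rewrite Hval.
    destruct (Nat.eq_dec i m) as [->|Hne].
    + fold al. replace (al * dot K (a m) d' - al * dot K (a m) d') with 0 by ring.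
      unfold Rdiv. lra.
    + assert (H := Hd' i ltac:(lia)). rewrite dot_farkas_proj in H. fold al in H.
      unfold Rdiv. assert (0 < / al) by (apply Rinv_0_lt_compat; exact Hal).
      assert (0 <= - (al * dot K (a i) d' - dot K (a i) d * dot K (a m) d') * / al)
        by (apply Rmult_le_pos; lra). lra.
  - rewrite Hval. apply Rdiv_lt_0_compat; assumption.
Qed.

Lemma farkas_lemma K m : forall (a : nat -> nat -> R) (b : nat -> R),
  (exists lam : nat -> R, (forall i, (i < m)%nat -> 0 <= lam i) /\
      forall k, (k < K)%nat -> b k = rsum m (fun i => lam i * a i k)) \/
  (exists d, (forall i, (i < m)%nat -> dot K (a i) d <= 0) /\ 0 < dot K b d).
Proof.
  induction m; intros a b.
  - destruct (classic (forall k, (k < K)%nat -> b k = 0)) as [H0|H0].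
    + left. exists (fun _ => 0). split; [intros; lra|]. intros k Hk. rewrite H0 by auto. simpl. ring.
    + right. exists b. split; [intros; lia|].
      apply not_all_ex_not in H0. destruct H0 as [k Hk]. apply imply_to_and in Hk.
      destruct Hk as [Hk Hb]. unfold dot. apply rsum_pos; [intros; apply Rle_0_sqr|].
      exists k. split; [exact Hk|]. apply (Rsqr_pos_lt (b k) Hb).
  - destruct (IHm a b) as [[lam [Hl Hb]]|[d [Hd Hbd]]].
    + left. exists (fun i => if Nat.eq_dec i m then 0 else lam i). split.
      * intros i Hi. destruct (Nat.eq_dec i m); [lra|apply Hl; lia].
      * intros k Hk. rewrite rsum_S, Hb by auto. destruct (Nat.eq_dec m m); [|lia].
        rewrite Rmult_0_l, Rplus_0_r. apply rsum_ext.
        intros i Hi. destruct (Nat.eq_dec i m); [lia|reflexivity].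
    + destruct (Rle_or_lt (dot K (a m) d) 0) as [Ham|Ham].
      * right. exists d. split; [|exact Hbd].
        intros i Hi. destruct (Nat.eq_dec i m); [subst; exact Ham | apply Hd; lia].
      * destruct (IHm (fun i => farkas_proj K (a m) d (a i)) (farkas_proj K (a m) d b))
          as [[mu [Hmu Hb']]|[d' [Hd' Hbd']]].
        -- left. exact (farkas_step_combination K m a b d mu Ham Hd Hbd Hmu Hb').
        -- right. exact (farkas_step_direction K m a b d d' Ham Hd' Hbd').
Qed.

Lemma minkowski_R2 a b c d : sqrt ((a + c) * (a + c) + (b + d) * (b + d)) <= sqrt (a * a + b * b) + sqrt (c * c + d * d).
Proof.
 set (S1 := sqrt (a * a + b * b)). set (S2 := sqrt (c * c + d * d)).
 assert (H1 : S1 * S1 = a * a + b * b) by (apply sqrt_sqrt; nra).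
 assert (H2 : S2 * S2 = c * c + d * d) by (apply sqrt_sqrt; nra).
 assert (P1 : 0 <= S1) by apply sqrt_pos. assert (P2 : 0 <= S2) by apply sqrt_pos.
 clearbody S1 S2.
 rewrite <- (sqrt_square (S1 + S2)) by lra. apply sqrt_le_1_alt.
 assert (a * c + b * d <= S1 * S2).
 { destruct (Rle_or_lt (a * c + b * d) 0). nra.
   assert ((a * c + b * d) * (a * c + b * d) <= (S1 * S2) * (S1 * S2)).
   { replace ((S1 * S2) * (S1 * S2)) with ((S1 * S1) * (S2 * S2)) by ring. rewrite H1, H2.
     pose proof (Rle_0_sqr (a*d - b*c)) as Hs. unfold Rsqr in Hs.
     replace ((a * a + b * b) * (c * c + d * d)) with ((a * c + b * d) * (a * c + b * d) + (a*d - b*c)*(a*d-b*c)) by ring. lra. }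
   destruct (Rle_or_lt (a*c+b*d) (S1*S2)) as [Hl|Hl]; auto. exfalso.
   assert (0 <= S1*S2) by (apply Rmult_le_pos; auto).
   assert ((S1*S2)*(S1*S2) < (a*c+b*d)*(a*c+b*d)) by (apply Rmult_le_0_lt_compat; lra). lra. }
 replace ((S1+S2)*(S1+S2)) with (S1*S1 + S2*S2 + 2*(S1*S2)) by ring. rewrite H1,H2. lra. Qed.

Lemma norm_rsum_le n (p q : nat -> R) :
  sqrt (rsum n p * rsum n p + rsum n q * rsum n q) <= rsum n (fun j => sqrt (p j * p j + q j * q j)).
Proof. induction n; simpl.
 - replace (0 * 0 + 0 * 0) with 0 by ring. rewrite sqrt_0. lra.
 - eapply Rle_trans. apply minkowski_R2. lra. Qed.

Lemma complex_mod_mult a b u v : sqrt ((a * u - b * v) * (a * u - b * v) + (b * u + a * v) * (b * u + a * v))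
  = sqrt (a * a + b * b) * sqrt (u * u + v * v).
Proof. rewrite <- sqrt_mult by nra. f_equal. ring. Qed.

Lemma eigenvalue_bound_supereigenvector K (B : nat -> nat -> R) (x : nat -> R) r a b :
  (forall i j, (i < K)%nat -> (j < K)%nat -> 0 <= B i j) ->
  (forall k, (k < K)%nat -> 0 < x k) ->
  (forall k, (k < K)%nat -> mxv K B x k <= r * x k) ->
  is_eigenvalue K B a b -> sqrt (a * a + b * b) <= r.
Proof.
 intros HB Hx Hr [u [v [[k0 [Hk0 Hnz]] [Hu Hv]]]].
 set (m := fun j => sqrt (u j * u j + v j * v j)).
 assert (Hm : forall j, 0 <= m j) by (intros; apply sqrt_pos).
 assert (Hm0 : 0 < m k0). { unfold m. apply sqrt_lt_R0. destruct Hnz; nra. }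
 destruct (argmax_exists K (fun j => m j / x j) ltac:(lia)) as [k [Hk Hmax]].
 set (t := m k / x k).
 assert (Ht : 0 < t). { assert (H := Hmax k0 Hk0). assert (0 < m k0 / x k0).
   apply Rdiv_lt_0_compat; auto. unfold t; lra. }
 assert (Hmt : forall j, (j < K)%nat -> m j <= t * x j).
 { intros j Hj. assert (H := Hmax j Hj). specialize (Hx j Hj).
   replace (m j) with ((m j / x j) * x j) by (field; nonzero). apply Rmult_le_compat_r; unfold t; lra. }
 assert (Hmk : m k = t * x k). { unfold t. field. specialize (Hx k Hk). nonzero. }
 assert (Hineq : sqrt (a * a + b * b) * m k <= rsum K (fun j => B k j * m j)).
 { unfold m at 1. rewrite <- complex_mod_mult. rewrite <- (Hu k Hk), <- (Hv k Hk). unfold mxv.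
   eapply Rle_trans. apply norm_rsum_le. apply rsum_le. intros j Hj.
   unfold m. assert (0 <= B k j) by (apply HB; auto).
   replace (B k j * sqrt (u j * u j + v j * v j))
     with (sqrt (B k j * B k j) * sqrt (u j * u j + v j * v j)) by (rewrite sqrt_square; auto).
   rewrite <- sqrt_mult by nra. apply Req_le; f_equal; ring. }
 assert (rsum K (fun j => B k j * m j) <= t * mxv K B x k).
 { unfold mxv. rewrite <- rsum_scal. apply rsum_le. intros j Hj.
   assert (H := Hmt j Hj). assert (0 <= B k j) by (apply HB; auto). nra. }
 assert (t * mxv K B x k <= t * (r * x k)). { apply Rmult_le_compat_l. lra. apply Hr; auto. }
 assert (0 < m k) by (rewrite Hmk; specialize (Hx k Hk); nra).
 assert (sqrt (a * a + b * b) * m k <= r * m k) by (rewrite Hmk in *; nra).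
 apply (Rmult_le_reg_r (m k)); auto.
Qed.

Lemma ln_le_m1 y : 0 < y -> ln y <= y - 1.
Proof. intros Hy. assert (H := exp_ineq1_le (ln y)). rewrite exp_ln in H by auto. lra. Qed.

Lemma ln_div_pos a b : 0 < a -> 0 < b -> ln (a / b) = ln a - ln b.
Proof. intros. unfold Rdiv. rewrite ln_mult, ln_Rinv; [ring|auto|auto|apply Rinv_0_lt_compat; auto]. Qed.

Lemma ln_le_pos a b : 0 < a -> a <= b -> ln a <= ln b.
Proof. intros Ha Hab. destruct Hab. left; apply ln_increasing; auto. subst; lra. Qed.

Lemma jensen_ln n (pi a : nat -> R) : (forall j, (j < n)%nat -> 0 <= pi j) -> rsum n pi = 1 ->
  (forall j, (j < n)%nat -> 0 < a j) ->
  0 < rsum n (fun j => pi j * a j) /\ rsum n (fun j => pi j * ln (a j)) <= ln (rsum n (fun j => pi j * a j)).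
Proof.
 intros Hp Hs Ha.
 assert (Hm : 0 < rsum n (fun j => pi j * a j)).
 { apply rsum_pos. intros j Hj. apply Rmult_le_pos; [auto|left; auto].
   apply NNPP. intro Hno. assert (rsum n pi = 0).
   { apply rsum_zero. intros j Hj. destruct (Hp j Hj); auto. exfalso; apply Hno. exists j. split; auto.
     apply Rmult_lt_0_compat; auto. }
   lra. }
 split; auto. set (m := rsum n (fun j => pi j * a j)).
 assert (rsum n (fun j => pi j * ln (a j)) - ln m = rsum n (fun j => pi j * ln (a j / m))).
 { rewrite <- (Rmult_1_l (ln m)). rewrite <- Hs, <- rsum_scal_r, <- rsum_minus. apply rsum_ext.
   intros j Hj. rewrite ln_div_pos by auto. ring. }
 assert (rsum n (fun j => pi j * ln (a j / m)) <= rsum n (fun j => pi j * (a j / m - 1))).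
 { apply rsum_le. intros j Hj. apply Rmult_le_compat_l; auto. apply ln_le_m1. apply Rdiv_lt_0_compat; auto. }
 assert (rsum n (fun j => pi j * (a j / m - 1)) = 0).
 { rewrite (rsum_ext _ _ (fun j => pi j * a j * / m - pi j)) by (intros; unfold Rdiv; ring).
   rewrite rsum_minus, rsum_scal_r, Hs. fold m. rewrite Rinv_r by (unfold m; nonzero). ring. }
 lra.
Qed.

(* If x and y are right and left eigenvectors of B for r > 0, the weight y o x is
   stationary for the stochastic matrix pi_kj = B_kj x_j / (r x_k): sum_k y_k x_k
   sum_j pi_kj (f_j - f_k) = 0 for every f. *)
Lemma perron_weight_stationary K (B : nat -> nat -> R) x y r (f : nat -> R) :
  0 < r -> (forall k, (k < K)%nat -> 0 < x k) ->
  (forall k, (k < K)%nat -> mxv K B x k = r * x k) ->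
  (forall k, (k < K)%nat -> mxv K (trmx B) y k = r * y k) ->
  rsum K (fun k => y k * x k * rsum K (fun j => B k j * x j / (r * x k) * (f j - f k))) = 0.
Proof.
  intros Hr Hx Ex Ey.
  assert (E1 : rsum K (fun k => y k * x k * rsum K (fun j => B k j * x j / (r * x k) * (f j - f k))) =
      rsum K (fun k => rsum K (fun j => / r * (y k * B k j) * (x j * f j)))
      - rsum K (fun k => rsum K (fun j => / r * (B k j * x j) * (y k * f k)))).
  { rewrite <- rsum_minus. apply rsum_ext. intros k Hk. rewrite <- rsum_scal, <- rsum_minus.
    apply rsum_ext. intros j Hj. specialize (Hx k Hk). field. split; nonzero. }
  assert (E2 : forall j, (j < K)%nat -> rsum K (fun k => / r * (y k * B k j) * (x j * f j)) = y j * x j * f j).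
  { intros j Hj. rewrite rsum_scal_r, rsum_scal.
    replace (rsum K (fun i => y i * B i j)) with (mxv K (trmx B) y j)
      by (unfold mxv, trmx; apply rsum_ext; intros; ring).
    rewrite Ey by auto. field. nonzero. }
  assert (E3 : forall k, (k < K)%nat -> rsum K (fun j => / r * (B k j * x j) * (y k * f k)) = y k * x k * f k).
  { intros k Hk. rewrite rsum_scal_r, rsum_scal. fold (mxv K B x k). rewrite Ex by auto. field. nonzero. }
  rewrite E1, rsum_swap, (rsum_ext _ _ _ E2), (rsum_ext _ _ _ E3). ring.
Qed.

(* Row-wise Jensen step of the Friedland-Karlin inequality: with rr = p / x, ln((B
   p)_k / p_k) >= ln r + sum_j pi_kj (ln rr_j - ln rr_k). *)
Lemma log_ratio_row_bound K (B : nat -> nat -> R) x r p k :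
  (forall i j, (i < K)%nat -> (j < K)%nat -> 0 <= B i j) ->
  (forall k, (k < K)%nat -> 0 < x k) -> (forall k, (k < K)%nat -> 0 < p k) -> 0 < r ->
  (forall k, (k < K)%nat -> mxv K B x k = r * x k) -> (k < K)%nat ->
  0 < mxv K B p k / p k /\
  ln r + rsum K (fun j => B k j * x j / (r * x k) * (ln (p j / x j) - ln (p k / x k)))
    <= ln (mxv K B p k / p k).
Proof.
  intros HB Hx Hp Hr Ex Hk.
  set (rr := fun j => p j / x j).
  assert (Hrr : forall j, (j < K)%nat -> 0 < rr j) by (intros; unfold rr; apply Rdiv_lt_0_compat; auto).
  set (pi := fun j => B k j * x j / (r * x k)).
  assert (Hxk := Hx k Hk).
  assert (Hpi0 : forall j, (j < K)%nat -> 0 <= pi j).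
  { intros j Hj. unfold pi, Rdiv. apply Rmult_le_pos; [apply Rmult_le_pos; [auto|left; auto]|].
    left; apply Rinv_0_lt_compat, Rmult_lt_0_compat; auto. }
  assert (Hpi1 : rsum K pi = 1).
  { unfold pi, Rdiv. rewrite rsum_scal_r. fold (mxv K B x k). rewrite Ex by auto. field. split; nonzero. }
  assert (HA : mxv K B p k / p k = r * rsum K (fun j => pi j * (rr j / rr k))).
  { unfold mxv. rewrite <- rsum_scal. unfold Rdiv at 1. rewrite <- rsum_scal_r. apply rsum_ext.
    intros j Hj. unfold pi, rr. assert (Hxj := Hx j Hj). assert (Hpk := Hp k Hk). assert (Hpj := Hp j Hj).
    field. repeat split; nonzero. }
  destruct (jensen_ln K pi (fun j => rr j / rr k) Hpi0 Hpi1) as [Hpos Hjen].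
  { intros j Hj. apply Rdiv_lt_0_compat; auto. }
  rewrite HA. split; [apply Rmult_lt_0_compat; auto|].
  rewrite ln_mult by auto. fold pi. fold (rr k).
  rewrite (rsum_ext _ (fun j => pi j * (ln (p j / x j) - ln (rr k))) (fun j => pi j * ln (rr j / rr k)));
    [lra|].
  intros j Hj. rewrite (ln_div_pos (rr j) (rr k)) by auto. reflexivity.
Qed.

Lemma friedland_karlin K (B : nat -> nat -> R) x y r p :
  (forall i j, (i < K)%nat -> (j < K)%nat -> 0 <= B i j) ->
  (forall k, (k < K)%nat -> 0 < x k) -> (forall k, (k < K)%nat -> 0 < y k) ->
  (forall k, (k < K)%nat -> 0 < p k) -> 0 < r ->
  (forall k, (k < K)%nat -> mxv K B x k = r * x k) ->
  (forall k, (k < K)%nat -> mxv K (trmx B) y k = r * y k) ->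
  rsum K (fun k => y k * x k) = 1 ->
  ln r <= rsum K (fun k => y k * x k * ln (mxv K B p k / p k)).
Proof.
  intros HB Hx Hy Hp Hr Ex Ey Hyx.
  set (f := fun j => ln (p j / x j)).
  assert (Hsum : rsum K (fun k => y k * x k *
                   (ln r + rsum K (fun j => B k j * x j / (r * x k) * (f j - f k))))
                 <= rsum K (fun k => y k * x k * ln (mxv K B p k / p k))).
  { apply rsum_le. intros k Hk. apply Rmult_le_compat_l; [apply Rmult_le_pos; left; auto|].
    apply (log_ratio_row_bound K B x r p k HB Hx Hp Hr Ex Hk). }
  rewrite (rsum_ext _ _ (fun k => y k * x k * ln r
             + y k * x k * rsum K (fun j => B k j * x j / (r * x k) * (f j - f k)))) in Hsum
    by (intros; ring).
  rewrite rsum_plus, (perron_weight_stationary K B x y r f Hr Hx Ex Ey), rsum_scal_r, Hyx in Hsum.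
  lra.
Qed.

Lemma phi_cont phi : A2 phi -> forall x, 0 < x -> continuity_pt phi x.
Proof. intros [[d [Hd _]] _] x Hx. apply derivable_continuous_pt. exists (d x). apply Hd; auto. Qed.

Lemma phi_mono phi : A2 phi -> forall x y, 0 < x -> x <= y -> phi x <= phi y.
Proof. intros [_ Hi] x y Hx Hxy. destruct Hxy. left; apply Hi; auto. subst; lra. Qed.

(* (A3) means that phi o exp is concave: two-point form, derived with the intermediate
   value theorem. *)
Lemma phi_exp_concave2 phi : A2 phi -> A3 phi -> forall a b t, 0 <= t <= 1 ->
  t * phi (exp a) + (1 - t) * phi (exp b) <= phi (exp (t * a + (1 - t) * b)).
Proof.
 intros H2 H3 a b t Ht.
 set (x := exp a). set (y := exp b). set (m := exp (t * a + (1 - t) * b)).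
 assert (Hx : 0 < x) by apply exp_pos. assert (Hy : 0 < y) by apply exp_pos. assert (Hm : 0 < m) by apply exp_pos.
 assert (Hlm : ln m = t * ln x + (1 - t) * ln y) by (unfold m, x, y; rewrite !ln_exp; auto).
 clearbody x y m.
 set (q := t * phi x + (1 - t) * phi y).
 destruct (Rle_or_lt q (phi m)) as [Hq|Hq]; auto. exfalso.
 set (M := Rmax x y).
 assert (HM : 0 < M) by (unfold M; apply Rlt_le_trans with x; [auto|apply Rmax_l]).
 assert (HqM : q <= phi M).
 { assert (phi x <= phi M) by (apply (phi_mono phi H2); auto; apply Rmax_l).
   assert (phi y <= phi M) by (apply (phi_mono phi H2); auto; apply Rmax_r).
   unfold q. nra. }
 assert (Hcontra : forall u, 0 < u -> phi u = q -> False).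
 { intros u Hu Hpu. assert (Hl := H3 x y u t Hx Hy Hu Ht Hpu). rewrite <- Hlm in Hl.
   assert (u <= m). { destruct (Rle_or_lt u m); auto. assert (ln m < ln u) by (apply ln_increasing; auto). lra. }
   assert (phi u <= phi m) by (apply (phi_mono phi H2); auto). lra. }
 destruct HqM as [HqM|HqM].
 - assert (Hmm : m < M). { destruct (Rle_or_lt M m); auto. assert (phi M <= phi m) by (apply (phi_mono phi H2); auto). lra. }
   destruct (IVT_interv (fun s => phi s - q) m M) as [u [Hu Hpu]]; auto.
   + intros s Hs. change (continuity_pt (phi - fct_cte q)%F s). apply continuity_pt_minus.
     * apply phi_cont; auto; lra.
     * apply continuity_pt_const. intros ? ?; auto.
   + simpl. lra.
   + simpl. lra.
   + apply (Hcontra u). lra. simpl in Hpu. lra.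
 - apply (Hcontra M HM). auto.
Qed.

Lemma phi_exp_jensen phi : A2 phi -> A3 phi -> forall n (w s : nat -> R), (1 <= n)%nat ->
  (forall k, (k < n)%nat -> 0 < w k) -> rsum n w = 1 ->
  rsum n (fun k => w k * phi (exp (s k))) <= phi (exp (rsum n (fun k => w k * s k))).
Proof.
 intros H2 H3 n. induction n; intros w s Hn Hw Hs; [lia|]. destruct n.
 - simpl in *. replace (w 0%nat) with 1 by lra. replace (0 + 1 * s 0%nat) with (s 0%nat) by ring. lra.
 - set (W := rsum (S n) w).
   assert (HW : 0 < W). { apply rsum_pos. intros; left; apply Hw; lia. exists 0%nat; split; [lia|apply Hw; lia]. }
   assert (Hwn := Hw (S n) ltac:(lia)).
   assert (HW1 : W + w (S n) = 1) by (unfold W; rewrite <- Hs; reflexivity).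
   assert (IH := IHn (fun k => w k / W) s ltac:(lia)).
   rewrite rsum_S. rewrite (rsum_S (S n) (fun k => w k * s k)).
   assert (E1 : rsum (S n) (fun k => w k * phi (exp (s k))) = W * rsum (S n) (fun k => w k / W * phi (exp (s k)))).
   { rewrite <- rsum_scal. apply rsum_ext. intros. field. nonzero. }
   assert (E2 : rsum (S n) (fun k => w k * s k) = W * rsum (S n) (fun k => w k / W * s k)).
   { rewrite <- rsum_scal. apply rsum_ext. intros. field. nonzero. }
   rewrite E1, E2.
   assert (IH' : rsum (S n) (fun k => w k / W * phi (exp (s k))) <= phi (exp (rsum (S n) (fun k => w k / W * s k)))).
   { apply IH.
     - intros k Hk; apply Rdiv_lt_0_compat; [apply Hw; lia | auto].
     - unfold Rdiv; rewrite rsum_scal_r; fold W; field; nonzero. }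
   assert (HF := phi_exp_concave2 phi H2 H3 (rsum (S n) (fun k => w k / W * s k)) (s (S n)) W ltac:(lra)).
   replace (1 - W) with (w (S n)) in HF by lra. nra.
Qed.

Lemma phi_increment_lower_bound phi : A2 phi -> A3 phi -> forall x0 h, 0 < x0 -> 0 < h -> h < x0 ->
  h / (x0 + h) <= ln 2 / (phi (2 * x0) - phi x0) * (phi (x0 + h) - phi x0).
Proof.
  intros [_ Hi] H3 x0 h Hx0 Hh Hhx.
  set (x2 := 2 * x0). set (x := x0 + h).
  assert (Hq : phi x0 < phi x2) by (apply Hi; unfold x2; lra).
  assert (Hxx : phi x < phi x2) by (apply Hi; unfold x, x2; lra).
  assert (Hx0x : phi x0 < phi x) by (apply Hi; unfold x; lra).
  (* write phi x as a convex combination of phi x0 and phi x2 and apply (A3) *)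
  set (t := (phi x2 - phi x) / (phi x2 - phi x0)).
  assert (Ht : 0 <= t <= 1).
  { unfold t. split.
    - unfold Rdiv; apply Rmult_le_pos; [lra | left; apply Rinv_0_lt_compat; lra].
    - apply (Rmult_le_reg_r (phi x2 - phi x0)); [lra|].
      replace ((phi x2 - phi x) / (phi x2 - phi x0) * (phi x2 - phi x0)) with (phi x2 - phi x)
        by (field; nonzero). lra. }
  assert (Hphi : phi x = t * phi x0 + (1 - t) * phi x2) by (unfold t; field; nonzero).
  assert (HA := H3 x0 x2 x t Hx0 ltac:(unfold x2; lra) ltac:(unfold x; lra) Ht Hphi).
  assert (Hln2 : ln x2 = ln 2 + ln x0) by (unfold x2; apply ln_mult; lra).
  assert (H1t : 1 - t = (phi x - phi x0) / (phi x2 - phi x0)) by (unfold t; field; nonzero).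
  assert (Hlow : h / x <= ln x - ln x0).
  { assert (H := ln_le_m1 (x0 / x) ltac:(apply Rdiv_lt_0_compat; unfold x; lra)).
    rewrite ln_div_pos in H by (unfold x; lra).
    replace (h / x) with (1 - x0 / x) by (unfold x; field; nonzero). lra. }
  assert (Hup : ln x - ln x0 <= (1 - t) * ln 2) by (rewrite Hln2 in HA; nra).
  rewrite H1t in Hup.
  replace (ln 2 / (phi x2 - phi x0) * (phi x - phi x0))
    with ((phi x - phi x0) / (phi x2 - phi x0) * ln 2) by (field; nonzero).
  lra.
Qed.

Lemma phi_deriv_pos phi dphi : (forall x, 0 < x -> derivable_pt_lim phi x (dphi x)) -> A2 phi -> A3 phi ->
  forall x0, 0 < x0 -> 0 < dphi x0.
Proof.
  intros Hd H2 H3 x0 Hx0.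
  destruct (Rle_or_lt (dphi x0) 0) as [Hle|]; [exfalso | assumption].
  set (kap := ln 2 / (phi (2 * x0) - phi x0)).
  assert (Hl2 : 0 < ln 2) by (rewrite <- ln_1; apply ln_increasing; lra).
  assert (Hq : phi x0 < phi (2 * x0)) by (apply (proj2 H2); lra).
  assert (Hk : 0 < kap) by (apply Rdiv_lt_0_compat; lra).
  (* a nonpositive derivative makes the difference quotient smaller than 1/(4 x0 kap) *)
  assert (He : 0 < / (4 * x0 * kap)) by (apply Rinv_0_lt_compat; nra).
  destruct (Hd x0 Hx0 (/ (4 * x0 * kap)) He) as [del Hdel].
  set (h := Rmin (del / 2) (x0 / 2)).
  assert (Hdp := cond_pos del).
  assert (Hh : 0 < h) by (unfold h; apply Rmin_glb_lt; lra).
  assert (Hh1 : h <= del / 2) by apply Rmin_l. assert (Hh2 : h <= x0 / 2) by apply Rmin_r.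
  specialize (Hdel h ltac:(nonzero) ltac:(rewrite Rabs_right; lra)).
  apply Rabs_def2 in Hdel. destruct Hdel as [Hd1 _].
  assert (Hdq' : phi (x0 + h) - phi x0 < h * / (4 * x0 * kap)).
  { replace (phi (x0 + h) - phi x0) with (h * ((phi (x0 + h) - phi x0) / h)) by (field; nonzero).
    apply Rmult_lt_compat_l; [exact Hh | lra]. }
  assert (Hlow := phi_increment_lower_bound phi H2 H3 x0 h Hx0 Hh ltac:(lra)). fold kap in Hlow.
  assert (E : kap * (h * / (4 * x0 * kap)) = h / (4 * x0)) by (field; split; nonzero).
  assert (h / (x0 + h) < h / (4 * x0)).
  { rewrite <- E. apply Rle_lt_trans with (kap * (phi (x0 + h) - phi x0)); [exact Hlow|].
    apply Rmult_lt_compat_l; auto. }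
  assert (h / (4 * x0) < h / (x0 + h)).
  { apply Rmult_lt_compat_l; [exact Hh|]. apply Rinv_lt_contravar; nra. }
  lra.
Qed.

Lemma psi_increasing phi : A2 phi -> forall a b, 0 < a -> a < b -> psi phi a < psi phi b.
Proof. intros [_ Hi] a b Ha Hab. unfold psi. assert (/ b < / a) by (apply Rinv_lt_contravar; nra).
 assert (phi (/ b) < phi (/ a)) by (apply Hi; auto; apply Rinv_0_lt_compat; lra). lra. Qed.

Lemma simplex_weight_near_vertex K (t : nat -> R) j eps : (j < K)%nat -> 0 < eps ->
  exists w, inPiplus K w /\ t j - eps < rsum K (fun k => w k * t k).
Proof.
 intros Hj He. assert (HK : 0 < INR K) by (apply lt_0_INR; lia).
 set (A := rsum K t / INR K - t j).
 set (del := Rmin (1/2) (eps / (2 * (Rabs A + 1)))).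
 assert (Hd1 : del <= 1/2) by apply Rmin_l.
 assert (Hd2 : del <= eps / (2 * (Rabs A + 1))) by apply Rmin_r.
 assert (HA : 0 <= Rabs A) by apply Rabs_pos.
 assert (Hd0 : 0 < del) by (apply Rmin_glb_lt; [lra|apply Rdiv_lt_0_compat; lra]).
 exists (fun k => del / INR K + (if Nat.eq_dec k j then 1 - del else 0)). split; [split|].
 - intros k Hk. destruct (Nat.eq_dec k j); assert (0 < del / INR K) by (apply Rdiv_lt_0_compat; auto); lra.
 - rewrite rsum_plus, rsum_const, rsum_single by auto. field. nonzero.
 - rewrite (rsum_ext _ _ (fun k => del / INR K * t k + (if Nat.eq_dec k j then (1 - del) * t k else 0))).
   2: { intros k Hk. destruct (Nat.eq_dec k j); ring. }
   rewrite rsum_plus, rsum_scal, rsum_single_f by auto.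
   replace (del / INR K * rsum K t + (1 - del) * t j) with (t j + del * A) by (unfold A; field; nonzero).
   assert (del * Rabs A < eps).
   { apply Rle_lt_trans with (eps / (2 * (Rabs A + 1)) * Rabs A). apply Rmult_le_compat_r; auto.
     apply (Rmult_lt_reg_r (2 * (Rabs A + 1))). lra.
     replace (eps / (2 * (Rabs A + 1)) * Rabs A * (2 * (Rabs A + 1))) with (eps * Rabs A) by (field; nonzero). nra. }
   assert (- Rabs A <= A) by (unfold Rabs; destruct (Rcase_abs A); lra).
   nra.
Qed.

Lemma der_ext f g x l l' : (forall s, f s = g s) -> l = l' -> derivable_pt_lim f x l -> derivable_pt_lim g x l'.
Proof. intros H <- Hd. replace g with f; auto. apply functional_extensionality; auto. Qed.

Lemma der_affine a b x : derivable_pt_lim (fun s => a + s * b) x b.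
Proof. apply (der_ext (fct_cte a + mult_real_fct b id)%F _ x (0 + b * 1)).
 intros s. unfold plus_fct, fct_cte, mult_real_fct, id. ring. ring.
 apply derivable_pt_lim_plus. apply derivable_pt_lim_const. apply derivable_pt_lim_scal. apply derivable_pt_lim_id. Qed.

Lemma der_rsum n (F : nat -> R -> R) (F' : nat -> R) x :
  (forall k, (k < n)%nat -> derivable_pt_lim (F k) x (F' k)) ->
  derivable_pt_lim (fun s => rsum n (fun k => F k s)) x (rsum n F').
Proof. induction n; intros H.
 - simpl. apply (der_ext (fct_cte 0) _ x 0). intros; auto. auto. apply derivable_pt_lim_const.
 - simpl. apply (der_ext ((fun s => rsum n (fun k => F k s)) + F n)%F _ x (rsum n F' + F' n)).
   intros s. unfold plus_fct. auto. auto.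
   apply derivable_pt_lim_plus. apply IHn. intros; apply H; lia. apply H; lia. Qed.

Lemma derivative_neg_decrease g D : derivable_pt_lim g 0 D -> D < 0 ->
  exists del, 0 < del /\ forall h, 0 < h < del -> g h < g 0.
Proof. intros Hd HD. destruct (Hd (- D / 2) ltac:(lra)) as [del Hdel].
 exists del. split. apply cond_pos. intros h [Hh1 Hh2].
 specialize (Hdel h ltac:(nonzero) ltac:(rewrite Rabs_right; lra)).
 apply Rabs_def2 in Hdel. destruct Hdel as [H1 _]. rewrite Rplus_0_l in H1.
 assert ((g h - g 0) / h < 0) by lra.
 assert (g h - g 0 < 0).
 { replace (g h - g 0) with ((g h - g 0) / h * h) by (field; nonzero). assert (0 < h) by lra. nra. }
 lra. Qed.

Lemma SIR_ext K V z p q k : (k < K)%nat -> (forall j, (j < K)%nat -> p j = q j) ->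
  SIR K V z p k = SIR K V z q k.
Proof. intros Hk H. unfold SIR. rewrite (mxv_ext K V p q) by auto. rewrite H by auto. auto. Qed.

Lemma Gfun_ext_p K phi V z g w p q : (forall j, (j < K)%nat -> p j = q j) ->
  Gfun K phi V z g w p = Gfun K phi V z g w q.
Proof. intros H. unfold Gfun. apply rsum_ext. intros k Hk. rewrite (SIR_ext K V z p q k Hk H). auto. Qed.

Lemma Gfun_ext_w K phi V z g w w' p : (forall k, (k < K)%nat -> w k = w' k) ->
  Gfun K phi V z g w p = Gfun K phi V z g w' p.
Proof. intros H. unfold Gfun. apply rsum_ext. intros k Hk. rewrite H; auto. Qed.

Lemma inP_ext K N C Ph p q : (forall j, (j < K)%nat -> p j = q j) -> inP K N C Ph p -> inP K N C Ph q.
Proof. intros H [H1 H2]. split. intros k Hk. rewrite <- H; auto.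
 intros n Hn. rewrite (rsum_ext _ _ (fun j => C n j * p j)). auto. intros j Hj. rewrite H; auto. Qed.

Lemma inPplus_ext K N C Ph p q : (forall j, (j < K)%nat -> p j = q j) -> inPplus K N C Ph p -> inPplus K N C Ph q.
Proof. intros H [H1 H2]. split. eapply inP_ext; eauto. intros k Hk. rewrite <- H; auto. Qed.

Lemma Gfun_mix K N phi V z g (c : nat -> R) (w : nat -> nat -> R) p :
  Gfun K phi V z g (fun k => rsum N (fun n => c n * w n k)) p = rsum N (fun n => c n * Gfun K phi V z g (w n) p).
Proof. unfold Gfun. rewrite (rsum_ext _ _ (fun k => rsum N (fun n => c n * w n k * psi phi (g k / SIR K V z p k)))).
 rewrite rsum_swap. apply rsum_ext. intros n Hn. rewrite <- rsum_scal. apply rsum_ext; intros; ring.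
 intros k Hk. rewrite <- rsum_scal_r. auto. Qed.

Section Network.

Variables (K N : nat) (C : nat -> nat -> R) (Ph : nat -> R) (V : nat -> nat -> R)
  (z gam pbar : nat -> R).
Hypothesis HK : (2 <= K)%nat.
Hypothesis HC01 : forall n k, (n < N)%nat -> (k < K)%nat -> C n k = 0 \/ C n k = 1.
Hypothesis HPh : forall n, (n < N)%nat -> 0 < Ph n.
Hypothesis HVnn : forall i j, (i < K)%nat -> (j < K)%nat -> 0 <= V i j.
Hypothesis HVirr : irreducible K V.
Hypothesis Hz : forall k, (k < K)%nat -> 0 < z k.
Hypothesis Hgam : forall k, (k < K)%nat -> 0 < gam k.
Hypothesis HpbarP : inP K N C Ph pbar.
Hypothesis Hpbar_max : forall q, inP K N C Ph q ->
  rmin K (fun k => SIR K V z q k / gam k) <= rmin K (fun k => SIR K V z pbar k / gam k).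

Definition sir_opt := rmin K (fun k => SIR K V z pbar k / gam k).

Definition load n (x : nat -> R) := rsum K (fun j => C n j * x j).

Definition vtg (y : nat -> R) k := rsum K (fun j => V j k * gam j * y j).

Lemma interf_nonneg x k : (k < K)%nat -> (forall j, (j < K)%nat -> 0 <= x j) ->
  0 <= mxv K V x k.
Proof. intros Hk Hx. apply rsum_nonneg. intros j Hj. apply Rmult_le_pos; [apply HVnn|apply Hx]; auto. Qed.

Lemma interf_mono x y k : (k < K)%nat -> (forall j, (j < K)%nat -> x j <= y j) ->
  mxv K V x k <= mxv K V y k.
Proof. intros Hk Hx. apply rsum_le. intros j Hj. apply Rmult_le_compat_l; [apply HVnn|apply Hx]; auto. Qed.

Lemma interf_noise_pos p k : (k < K)%nat -> (forall j, (j < K)%nat -> 0 <= p j) ->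
  0 < mxv K V p k + z k.
Proof. intros Hk Hp. assert (H:=interf_nonneg p k Hk Hp). assert (H2:=Hz k Hk). lra. Qed.

Lemma sir_ge_iff p k c : (k < K)%nat -> (forall j, (j < K)%nat -> 0 <= p j) ->
  (c <= SIR K V z p k / gam k <-> c * gam k * (mxv K V p k + z k) <= p k).
Proof. intros Hk Hp. assert (Hd:=interf_noise_pos p k Hk Hp). assert (Hg:=Hgam k Hk). unfold SIR.
 split; intros H.
 - apply (Rmult_le_compat_r (gam k * (mxv K V p k + z k))) in H; [|apply Rmult_le_pos; lra].
   replace (p k / (mxv K V p k + z k) / gam k * (gam k * (mxv K V p k + z k))) with (p k) in H by (field; split; nonzero). lra.
 - replace c with (c * gam k * (mxv K V p k + z k) / (mxv K V p k + z k) / gam k) by (field; split; nonzero).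
   unfold Rdiv. apply Rmult_le_compat_r. left; apply Rinv_0_lt_compat; lra.
   apply Rmult_le_compat_r. left; apply Rinv_0_lt_compat; lra. auto. Qed.

Lemma sir_pos p k : (k < K)%nat -> (forall j, (j < K)%nat -> 0 <= p j) -> 0 < p k ->
  0 < SIR K V z p k.
Proof. intros Hk Hp Hpk. unfold SIR. apply Rdiv_lt_0_compat; auto. apply interf_noise_pos; auto. Qed.

(* sir_opt > 0: a small uniform power vector is feasible and has positive SIRs. *)
Lemma sir_opt_pos : 0 < sir_opt.
Proof.
 destruct (uniform_small_param N (fun n s => rsum K (fun j => C n j * s) <= Ph n)) as [e [He Hs]].
 { intros n Hn. exists (Ph n / INR K). assert (0 < INR K) by (apply lt_0_INR; lia).
   assert (Hp := HPh n Hn). split. apply Rdiv_lt_0_compat; auto.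
   intros s Hs0. eapply Rle_trans. apply (rsum_le _ _ (fun _ => s)).
   intros j Hj. destruct (HC01 n j Hn Hj) as [->| ->]; lra.
   rewrite rsum_const. apply (Rmult_le_reg_r (/ INR K)). apply Rinv_0_lt_compat; auto.
   replace (INR K * s * / INR K) with s by (field; nonzero). unfold Rdiv in Hs0. lra. }
 assert (Hq : inP K N C Ph (fun _ => e)).
 { split. intros; lra. intros n Hn. apply Hs; auto; lra. }
 eapply Rlt_le_trans; [|apply (Hpbar_max _ Hq)].
 destruct (rmin_attained K (fun k => SIR K V z (fun _ => e) k / gam k) ltac:(lia)) as [k [Hk ->]].
 unfold SIR. assert (0 < mxv K V (fun _ => e) k + z k) by (apply interf_noise_pos; auto; intros; lra).
 assert (Hg:=Hgam k Hk). apply Rdiv_lt_0_compat; auto. apply Rdiv_lt_0_compat; auto. Qed.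

Lemma pbar_nonneg k : (k < K)%nat -> 0 <= pbar k.
Proof. intros; apply (proj1 HpbarP); auto. Qed.

Lemma pbar_sir_ge k : (k < K)%nat ->
  sir_opt * gam k * (mxv K V pbar k + z k) <= pbar k.
Proof. intros Hk. apply (sir_ge_iff pbar k sir_opt Hk pbar_nonneg).
 unfold sir_opt. exact (rmin_le K (fun k => SIR K V z pbar k / gam k) k Hk). Qed.

Lemma pbar_pos k : (k < K)%nat -> 0 < pbar k.
Proof. intros Hk. assert (H := pbar_sir_ge k Hk). assert (H1 := sir_opt_pos). assert (H2 := Hgam k Hk).
 assert (H3 := interf_noise_pos pbar k Hk pbar_nonneg).
 assert (0 < sir_opt * gam k * (mxv K V pbar k + z k)) by (repeat apply Rmult_lt_0_compat; auto). lra. Qed.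

Lemma pbar_in_Pplus : inPplus K N C Ph pbar.
Proof. split; [exact HpbarP | exact pbar_pos]. Qed.

(* Comparison principle for the M-matrix I - sir_opt Gamma V, using the positive
   supersolution pbar: (I - sir_opt Gamma V) x >= 0 implies x >= 0. *)
Lemma Mmatrix_nonneg_right x : (forall k, (k < K)%nat -> 0 <= x k - sir_opt * gam k * mxv K V x k) ->
  forall k, (k < K)%nat -> 0 <= x k.
Proof.
 intros H.
 destruct (argmax_exists K (fun j => - (x j / pbar j)) ltac:(lia)) as [k [Hk Hmax]].
 set (t := x k / pbar k).
 assert (Hxt : forall j, (j < K)%nat -> t * pbar j <= x j).
 { intros j Hj. assert (Hm := Hmax j Hj). assert (Hp := pbar_pos j Hj).
   replace (x j) with ((x j / pbar j) * pbar j) by (field; nonzero).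
   apply Rmult_le_compat_r; [lra|unfold t; lra]. }
 destruct (Rle_or_lt 0 t) as [Ht|Ht].
 - intros j Hj. assert (Hp := pbar_pos j Hj). assert (H1 := Hxt j Hj).
   assert (0 <= t * pbar j) by (apply Rmult_le_pos; lra). lra.
 - exfalso.
   assert (Hpk := pbar_pos k Hk). assert (Hxk : x k = t * pbar k) by (unfold t; field; nonzero).
   assert (Hv : t * mxv K V pbar k <= mxv K V x k).
   { rewrite <- mxv_scal. apply interf_mono; auto. }
   assert (Hge := pbar_sir_ge k Hk). assert (Hc := sir_opt_pos). assert (Hg := Hgam k Hk). assert (Hzk := Hz k Hk).
   assert (Hs : sir_opt * gam k * mxv K V pbar k < pbar k).
   { assert (0 < sir_opt * gam k * z k) by (repeat apply Rmult_lt_0_compat; auto). nra. }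
   specialize (H k Hk).
   assert (Hcg : 0 < sir_opt * gam k) by (apply Rmult_lt_0_compat; auto).
   assert (sir_opt * gam k * (t * mxv K V pbar k) <= sir_opt * gam k * mxv K V x k)
     by (apply Rmult_le_compat_l; lra).
   assert (t * (sir_opt * gam k * mxv K V pbar k) > t * pbar k)
     by (apply Rmult_lt_gt_compat_neg_l; auto).
   nra.
Qed.

Lemma Mmatrix_inj_right x : (forall k, (k < K)%nat -> x k - sir_opt * gam k * mxv K V x k = 0) ->
  forall k, (k < K)%nat -> x k = 0.
Proof. intros H k Hk.
 assert (H1 := Mmatrix_nonneg_right x ltac:(intros; rewrite H; auto; lra) k Hk).
 assert (H2 := Mmatrix_nonneg_right (fun j => - x j)).
 assert (0 <= - x k). { apply H2; auto. intros j Hj.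
   replace (fun j => - x j) with (fun j => (-1) * x j) by (apply functional_extensionality; intros; ring).
   rewrite mxv_scal. specialize (H j Hj). lra. }
 lra. Qed.

Lemma Mmatrix_solve_right b : exists x, forall k, (k < K)%nat -> x k - sir_opt * gam k * mxv K V x k = b k.
Proof.
 destruct (surjective_of_injective K (fun i j => (if Nat.eq_dec i j then 1 else 0) - sir_opt * gam i * V i j))
   with (b := b) as [x Hx].
 - intros x Hx. apply Mmatrix_inj_right. intros k Hk. rewrite <- (Hx k Hk), mxv_id_minus by auto.
   f_equal. unfold mxv. rewrite <- rsum_scal. apply rsum_ext; intros; ring.
 - exists x. intros k Hk. rewrite <- (Hx k Hk), mxv_id_minus by auto.
   f_equal. unfold mxv. rewrite <- rsum_scal. apply rsum_ext; intros; ring.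
Qed.

Lemma irreducible_spread_right d : (forall k, (k < K)%nat -> 0 <= d k) ->
  (forall i j, (i < K)%nat -> (j < K)%nat -> V i j <> 0 -> 0 < d j -> 0 < d i) ->
  (exists k, (k < K)%nat /\ d k <> 0) -> forall k, (k < K)%nat -> 0 < d k.
Proof. intros Hd Hc [k0 [Hk0 Hnz]] k Hk.
 apply NNPP. intro Hn.
 destruct (HVirr (fun j => 0 < d j)) as [i [j [Hi [Hj [Hni [Hsj HV]]]]]].
 - exists k0. split; auto. specialize (Hd k0 Hk0). destruct Hd; auto. congruence.
 - exists k. split; auto.
 - apply Hni. apply (Hc i j); auto. Qed.

Lemma irreducible_spread_left y : (forall k, (k < K)%nat -> 0 <= y k) ->
  (forall i j, (i < K)%nat -> (j < K)%nat -> V i j <> 0 -> 0 < y i -> 0 < y j) ->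
  (exists k, (k < K)%nat /\ y k <> 0) -> forall k, (k < K)%nat -> 0 < y k.
Proof. intros Hd Hc [k0 [Hk0 Hnz]] k Hk.
 apply NNPP. intro Hn.
 destruct (HVirr (fun j => ~ 0 < y j)) as [i [j [Hi [Hj [Hni [Hsj HV]]]]]].
 - exists k. split; auto.
 - exists k0. split; auto. intro H; apply H. specialize (Hd k0 Hk0). destruct Hd; auto. congruence.
 - apply Hsj. apply (Hc i j); auto. apply NNPP; auto. Qed.

Lemma interf_pos_of_link d i j : (i < K)%nat -> (j < K)%nat -> V i j <> 0 -> 0 < d j ->
  (forall k, (k < K)%nat -> 0 <= d k) -> 0 < mxv K V d i.
Proof. intros Hi Hj HV Hdj Hd. apply rsum_pos.
 intros k Hk. apply Rmult_le_pos; [apply HVnn|apply Hd]; auto.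
 exists j. split; auto. assert (0 <= V i j) by (apply HVnn; auto). apply Rmult_lt_0_compat; auto.
 destruct H; auto. congruence. Qed.

Lemma no_uniform_sir_improvement p : inP K N C Ph p ->
  ~ (forall k, (k < K)%nat -> sir_opt < SIR K V z p k / gam k).
Proof. intros Hp H.
 destruct (rmin_attained K (fun k => SIR K V z p k / gam k) ltac:(lia)) as [k [Hk Hr]].
 assert (H1 := Hpbar_max p Hp). fold sir_opt in H1. specialize (H k Hk). simpl in Hr. lra. Qed.

Lemma scaling_improves_sir p : inP K N C Ph p -> (forall k, (k < K)%nat -> 0 < p k) ->
  (forall n, (n < N)%nat -> load n p < Ph n) ->
  exists p', inP K N C Ph p' /\
     forall k, (k < K)%nat -> SIR K V z p k < SIR K V z p' k.
Proof. intros Hp Hpos Hs.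
 destruct (uniform_small_param N (fun n s => (1 + s) * load n p <= Ph n)) as [e [He Hsm]].
 { intros n Hn. specialize (Hs n Hn). assert (0 <= load n p).
   { apply rsum_nonneg. intros j Hj. apply Rmult_le_pos. destruct (HC01 n j Hn Hj) as [->| ->]; lra. apply (proj1 Hp); auto. }
   destruct (Req_dec (load n p) 0) as [E|E].
   - exists 1. split; [lra|]. intros. rewrite E. assert (Hp0 := HPh n Hn). lra.
   - exists ((Ph n - load n p) / load n p). split. apply Rdiv_lt_0_compat; lra.
     intros s [Hs1 Hs2]. apply (Rmult_le_compat_r (load n p)) in Hs2; [|lra].
     replace ((Ph n - load n p) / load n p * load n p) with (Ph n - load n p) in Hs2 by (field; auto). lra. }
 exists (fun j => (1 + e) * p j). split.
 - split. intros k Hk. specialize (Hpos k Hk). nra.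
   intros n Hn. rewrite (rsum_ext _ _ (fun j => (1 + e) * (C n j * p j))) by (intros; ring).
   rewrite rsum_scal. apply Hsm; auto; lra.
 - intros k Hk. unfold SIR. rewrite mxv_scal.
   assert (Hd := interf_noise_pos p k Hk ltac:(intros j Hj; specialize (Hpos j Hj); lra)).
   assert (Hv := interf_nonneg p k Hk ltac:(intros j Hj; specialize (Hpos j Hj); lra)).
   assert (Hzk := Hz k Hk). specialize (Hpos k Hk).
   assert (0 < (1 + e) * mxv K V p k + z k) by nra.
   apply (Rmult_lt_reg_r ((mxv K V p k + z k) * ((1 + e) * mxv K V p k + z k))).
   apply Rmult_lt_0_compat; auto.
   replace (p k / (mxv K V p k + z k) * ((mxv K V p k + z k) * ((1 + e) * mxv K V p k + z k)))
     with (p k * ((1 + e) * mxv K V p k + z k)) by (field; nonzero).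
   replace ((1 + e) * p k / ((1 + e) * mxv K V p k + z k) * ((mxv K V p k + z k) * ((1 + e) * mxv K V p k + z k)))
     with ((1 + e) * p k * (mxv K V p k + z k)) by (field; nonzero).
   assert (0 < e * p k * z k) by (repeat apply Rmult_lt_0_compat; auto). nra.
Qed.

Lemma sir_of_balance p k : (k < K)%nat -> (forall j, (j < K)%nat -> 0 <= p j) ->
  p k = sir_opt * gam k * (mxv K V p k + z k) ->
  SIR K V z p k / gam k = sir_opt.
Proof. intros Hk Hp E. assert (Hd := interf_noise_pos p k Hk Hp). assert (Hg := Hgam k Hk).
 unfold SIR. rewrite E. field. split; nonzero. Qed.

(* A feasible q strictly above a balanced point po would leave slack in every
   constraint, so scaling po up would beat sir_opt. *)
Lemma no_feasible_strictly_above po q :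
  (forall k, (k < K)%nat -> 0 < po k) ->
  (forall k, (k < K)%nat -> po k = sir_opt * gam k * (mxv K V po k + z k)) ->
  inP K N C Ph q -> (forall k, (k < K)%nat -> po k < q k) -> False.
Proof.
  intros Hpop Hbal Hq Hlt.
  assert (Hpo0 : forall k, (k < K)%nat -> 0 <= po k) by (intros k Hk; left; auto).
  assert (Hin : inP K N C Ph po).
  { split; [exact Hpo0|]. intros n Hn. apply Rle_trans with (rsum K (fun j => C n j * q j)); [|apply (proj2 Hq); auto].
    apply rsum_le. intros j Hj. specialize (Hlt j Hj). destruct (HC01 n j Hn Hj) as [->| ->]; lra. }
  destruct (scaling_improves_sir po Hin Hpop) as [p' [Hp' Hsir]].
  { intros n Hn. destruct (classic (exists j, (j < K)%nat /\ C n j = 1)) as [[j [Hj Hc1]]|Hc0].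
    - apply Rlt_le_trans with (rsum K (fun j => C n j * q j)); [|apply (proj2 Hq); auto].
      unfold load. apply rsum_lt.
      + intros i Hi. specialize (Hlt i Hi). destruct (HC01 n i Hn Hi) as [->| ->]; lra.
      + exists j. split; [exact Hj|]. rewrite Hc1. specialize (Hlt j Hj). lra.
    - unfold load. rewrite rsum_zero; [apply HPh; auto|]. intros j Hj.
      destruct (HC01 n j Hn Hj) as [->| E]; [ring|]. exfalso; apply Hc0; exists j; auto. }
  apply (no_uniform_sir_improvement p' Hp'). intros k Hk. specialize (Hsir k Hk).
  rewrite <- (sir_of_balance po k Hk Hpo0 (Hbal k Hk)). assert (Hg := Hgam k Hk).
  unfold Rdiv. apply Rmult_lt_compat_r; [apply Rinv_0_lt_compat; auto | exact Hsir].
Qed.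

Lemma balanced_point_unique : exists po,
  (forall k, (k < K)%nat -> po k - sir_opt * gam k * mxv K V po k = sir_opt * gam k * z k) /\
  (forall q, inP K N C Ph q ->
     (forall k, (k < K)%nat -> sir_opt <= SIR K V z q k / gam k) ->
     forall k, (k < K)%nat -> q k = po k).
Proof.
  destruct (Mmatrix_solve_right (fun k => sir_opt * gam k * z k)) as [po Hpo].
  exists po. split; [exact Hpo|].
  assert (Hc := sir_opt_pos).
  assert (Hpo0 : forall k, (k < K)%nat -> 0 <= po k).
  { apply Mmatrix_nonneg_right. intros k Hk. rewrite Hpo by auto.
    assert (H1 := Hgam k Hk). assert (H2 := Hz k Hk).
    assert (0 < sir_opt * gam k * z k) by (repeat apply Rmult_lt_0_compat; auto). lra. }
  assert (Hbal : forall k, (k < K)%nat -> po k = sir_opt * gam k * (mxv K V po k + z k)).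
  { intros k Hk. specialize (Hpo k Hk). lra. }
  assert (Hpop : forall k, (k < K)%nat -> 0 < po k).
  { intros k Hk. rewrite Hbal by auto. assert (H1 := Hgam k Hk). assert (H2 := interf_noise_pos po k Hk Hpo0).
    repeat apply Rmult_lt_0_compat; auto. }
  intros q Hq Hsq.
  (* d = q - po is a nonnegative supersolution of (I - sir_opt Gamma V) d >= 0 *)
  set (d := fun j => q j - po j).
  assert (Hd : forall k, (k < K)%nat -> 0 <= d k - sir_opt * gam k * mxv K V d k).
  { intros k Hk. unfold d.
    replace (fun j => q j - po j) with (fun j => q j + (-1) * po j)
      by (apply functional_extensionality; intros; ring).
    rewrite mxv_plus, mxv_scal. assert (H1 := proj1 (sir_ge_iff q k sir_opt Hk (proj1 Hq)) (Hsq k Hk)).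
    specialize (Hpo k Hk). lra. }
  assert (Hd0 := Mmatrix_nonneg_right d Hd).
  destruct (classic (exists k, (k < K)%nat /\ d k <> 0)) as [Hex|Hno].
  - (* by irreducibility a nonzero d is positive everywhere, i.e. q > po: impossible *)
    exfalso. apply (no_feasible_strictly_above po q Hpop Hbal Hq). intros k Hk.
    assert (Hdp : 0 < d k).
    { apply irreducible_spread_right; auto. intros i j Hi Hj HV Hdj.
      assert (H1 := interf_pos_of_link d i j Hi Hj HV Hdj Hd0). specialize (Hd i Hi).
      assert (H2 := Hgam i Hi). assert (0 < sir_opt * gam i * mxv K V d i) by (repeat apply Rmult_lt_0_compat; auto).
      lra. }
    unfold d in Hdp. lra.
  - intros k Hk. assert (Hdk : d k = 0) by (apply NNPP; intro; apply Hno; exists k; auto).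
    unfold d in Hdk. lra.
Qed.

Lemma pbar_balanced : forall k, (k < K)%nat ->
  pbar k = sir_opt * gam k * (mxv K V pbar k + z k).
Proof. destruct (balanced_point_unique) as [po [Hpo Hu]].
 assert (E : forall k, (k < K)%nat -> pbar k = po k).
 { apply Hu. apply HpbarP. intros k Hk.
   exact (rmin_le K (fun k => SIR K V z pbar k / gam k) k Hk). }
 intros k Hk. rewrite (mxv_ext _ _ _ po) by auto. rewrite E by auto. specialize (Hpo k Hk). lra. Qed.

Lemma pbar_unique q : inP K N C Ph q ->
  (forall k, (k < K)%nat -> sir_opt <= SIR K V z q k / gam k) ->
  forall k, (k < K)%nat -> q k = pbar k.
Proof. destruct (balanced_point_unique) as [po [Hpo Hu]]. intros Hq Hs k Hk.
 rewrite (Hu q Hq Hs k Hk). symmetry. apply Hu. apply HpbarP. intros j Hj.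
 exact (rmin_le K (fun k => SIR K V z pbar k / gam k) j Hj). auto. Qed.

Lemma sir_pbar k : (k < K)%nat -> SIR K V z pbar k / gam k = sir_opt.
Proof. intros Hk. apply sir_of_balance; auto. apply pbar_nonneg. apply pbar_balanced; auto. Qed.

Lemma tight_constraint_exists : exists n, (n < N)%nat /\ load n pbar = Ph n.
Proof. apply NNPP. intro Hno.
 destruct (scaling_improves_sir pbar HpbarP pbar_pos) as [p' [Hp' Hlt]].
 { intros n Hn. assert (H := proj2 HpbarP n Hn). unfold load. destruct H; auto.
   exfalso. apply Hno. exists n. auto. }
 apply (no_uniform_sir_improvement p' Hp'). intros k Hk. specialize (Hlt k Hk).
 rewrite <- (sir_pbar k Hk). assert (Hg := Hgam k Hk).
 unfold Rdiv. apply Rmult_lt_compat_r; auto. apply Rinv_0_lt_compat; auto. Qed.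

Lemma inN0_tight n : inN0 K N C Ph pbar n <-> ((n < N)%nat /\ load n pbar = Ph n).
Proof. unfold inN0, gfun. split.
 - intros [Hn [E _]]. split; auto. assert (Hp := HPh n Hn). unfold load.
   apply (Rmult_eq_reg_r (/ Ph n)). unfold Rdiv in E. rewrite E. field. nonzero. apply Rinv_neq_0_compat. nonzero.
 - intros [Hn E]. split; auto. split. unfold load in E. rewrite E. field. assert (Hp := HPh n Hn). nonzero.
   intros m Hm. assert (Hp := HPh m Hm). assert (H := proj2 HpbarP m Hm).
   apply (Rmult_le_reg_r (Ph m)); auto. unfold Rdiv. rewrite Rmult_assoc, Rinv_l by nonzero. lra. Qed.

(* rho_opt = 1/sir_opt, the common value of the spectral radii of the tight matrices B^(n). *)
Definition rho_opt := / sir_opt.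

Lemma rho_opt_pos : 0 < rho_opt.
Proof. unfold rho_opt. apply Rinv_0_lt_compat, sir_opt_pos. Qed.

Lemma pbar_rho k : (k < K)%nat ->
  gam k * mxv K V pbar k = rho_opt * pbar k - gam k * z k.
Proof. intros Hk. rewrite (pbar_balanced k Hk). unfold rho_opt. assert (H := sir_opt_pos).
 field. nonzero. Qed.

Lemma mxv_B n x k :
  mxv K (Bmat V z gam C Ph n) x k =
  gam k * mxv K V x k + / Ph n * (gam k * z k * load n x).
Proof. unfold mxv, Bmat, load.
 rewrite (rsum_ext _ _ (fun j => gam k * (V k j * x j) + / Ph n * (gam k * z k * (C n j * x j)))) by (intros; ring).
 rewrite rsum_plus, !rsum_scal. auto. Qed.

Lemma mxv_BT n y k :
  mxv K (trmx (Bmat V z gam C Ph n)) y k =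
  vtg y k + C n k * / Ph n * rsum K (fun j => gam j * z j * y j).
Proof. unfold mxv, trmx, Bmat, vtg.
 rewrite (rsum_ext _ _ (fun j => V j k * gam j * y j + C n k * / Ph n * (gam j * z j * y j))) by (intros; ring).
 rewrite rsum_plus, !rsum_scal. auto. Qed.

Lemma load_nonneg n x : (n < N)%nat -> (forall j, (j < K)%nat -> 0 <= x j) -> 0 <= load n x.
Proof. intros Hn Hx. apply rsum_nonneg. intros j Hj. apply Rmult_le_pos; auto.
 destruct (HC01 n j Hn Hj) as [->| ->]; lra. Qed.

Lemma B_nonneg n i j : (n < N)%nat -> (i < K)%nat -> (j < K)%nat ->
  0 <= Bmat V z gam C Ph n i j.
Proof. intros Hn Hi Hj. unfold Bmat. assert (H1 := Hgam i Hi). assert (H2 := HVnn i j Hi Hj).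
 assert (H3 := Hz i Hi). assert (H4 := HPh n Hn). assert (0 <= C n j) by (destruct (HC01 n j Hn Hj) as [->| ->]; lra).
 assert (0 < / Ph n) by (apply Rinv_0_lt_compat; auto).
 apply Rplus_le_le_0_compat. apply Rmult_le_pos; lra. apply Rmult_le_pos. lra.
 apply Rmult_le_pos; [|lra]. apply Rmult_le_pos; lra. Qed.

Lemma B_pbar_le n k : (n < N)%nat -> (k < K)%nat ->
  mxv K (Bmat V z gam C Ph n) pbar k <= rho_opt * pbar k.
Proof. intros Hn Hk. rewrite mxv_B. rewrite pbar_rho by auto.
 assert (H := proj2 HpbarP n Hn). fold (load n pbar) in H. assert (Hp := HPh n Hn).
 assert (H1 := Hgam k Hk). assert (H3 := Hz k Hk). assert (Hc := load_nonneg n pbar Hn pbar_nonneg).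
 assert (/ Ph n * (gam k * z k * load n pbar) <= gam k * z k).
 { replace (/ Ph n * (gam k * z k * load n pbar)) with (gam k * z k * (load n pbar / Ph n)) by (field; nonzero).
   rewrite <- (Rmult_1_r (gam k * z k)) at 2. apply Rmult_le_compat_l. apply Rmult_le_pos; lra.
   apply (Rmult_le_reg_r (Ph n)); auto. replace (load n pbar / Ph n * Ph n) with (load n pbar) by (field; nonzero). lra. }
 lra. Qed.

Lemma B_pbar_eq n k : (n < N)%nat -> (k < K)%nat -> load n pbar = Ph n ->
  mxv K (Bmat V z gam C Ph n) pbar k = rho_opt * pbar k.
Proof. intros Hn Hk E. rewrite mxv_B, E. rewrite pbar_rho by auto. assert (Hp := HPh n Hn). field. nonzero. Qed.

Lemma spectral_radius_le_rho_opt n r : (n < N)%nat -> is_spectral_radius K (Bmat V z gam C Ph n) r ->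
  r <= rho_opt.
Proof. intros Hn [[a [b [He Hs]]] _]. rewrite <- Hs.
 apply (eigenvalue_bound_supereigenvector K (Bmat V z gam C Ph n) pbar rho_opt a b); [| apply pbar_pos | | exact He].
 - intros; apply B_nonneg; auto.
 - intros; apply B_pbar_le; auto. Qed.

Lemma spectral_radius_tight n r : (n < N)%nat -> load n pbar = Ph n ->
  is_spectral_radius K (Bmat V z gam C Ph n) r -> r = rho_opt.
Proof. intros Hn E Hr. apply Rle_antisym. eapply spectral_radius_le_rho_opt; eauto.
 destruct Hr as [_ Hr].
 assert (H := Hr rho_opt 0).
 replace (rho_opt * rho_opt + 0 * 0) with (rho_opt * rho_opt) in H by ring.
 rewrite sqrt_square in H by (left; apply rho_opt_pos). apply H.
 exists pbar, (fun _ => 0). split; [|split].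
 - exists 0%nat. split. lia. left. assert (H0 := pbar_pos 0 ltac:(lia)). nonzero.
 - intros i Hi. rewrite B_pbar_eq by auto. ring.
 - intros i Hi. replace (fun _ : nat => 0) with (fun _ : nat => 0 * 0) by (apply functional_extensionality; intros; ring).
   rewrite mxv_scal. ring.
Qed.

Lemma pbar_vtg_swap y : rsum K (fun k => pbar k * vtg y k) =
  rsum K (fun j => gam j * y j * mxv K V pbar j).
Proof. unfold vtg, mxv.
 rewrite (rsum_ext _ _ (fun k => rsum K (fun j => pbar k * (V j k * gam j * y j)))) by (intros; rewrite rsum_scal; auto).
 rewrite rsum_swap. apply rsum_ext. intros j Hj. rewrite <- rsum_scal. apply rsum_ext. intros; ring. Qed.

Lemma pbar_dual_identity y : rsum K (fun k => pbar k * (rho_opt * y k - vtg y k)) =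
  rsum K (fun j => gam j * z j * y j).
Proof.
 rewrite (rsum_ext _ _ (fun k => rho_opt * pbar k * y k - pbar k * vtg y k)) by (intros; ring).
 rewrite rsum_minus, pbar_vtg_swap, <- rsum_minus. apply rsum_ext. intros j Hj.
 replace (gam j * y j * mxv K V pbar j) with (y j * (gam j * mxv K V pbar j)) by ring.
 rewrite pbar_rho by auto. ring. Qed.

Lemma vtg_mono x y k : (k < K)%nat -> (forall j, (j < K)%nat -> x j <= y j) -> vtg x k <= vtg y k.
Proof. intros Hk H. unfold vtg. apply rsum_le. intros j Hj. apply Rmult_le_compat_l; auto.
 apply Rmult_le_pos. apply HVnn; auto. left; apply Hgam; auto. Qed.

Lemma vtg_lin a x b y k : vtg (fun j => a * x j + b * y j) k = a * vtg x k + b * vtg y k.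
Proof. unfold vtg. rewrite <- !rsum_scal, <- rsum_plus. apply rsum_ext; intros; ring. Qed.

Lemma vtg_rsum M (c : nat -> R) (Y : nat -> nat -> R) k :
  vtg (fun j => rsum M (fun n => c n * Y n j)) k = rsum M (fun n => c n * vtg (Y n) k).
Proof. unfold vtg.
 rewrite (rsum_ext _ _ (fun j => rsum M (fun n => V j k * gam j * (c n * Y n j)))) by (intros; rewrite rsum_scal; auto).
 rewrite rsum_swap. apply rsum_ext. intros n Hn. rewrite <- rsum_scal. apply rsum_ext; intros; ring. Qed.

(* Comparison principle for the transposed M-matrix rho_opt I - V^T Gamma, obtained by
   duality with pbar. *)
Lemma Mmatrix_nonneg_left y : (forall k, (k < K)%nat -> 0 <= rho_opt * y k - vtg y k) ->
  forall k, (k < K)%nat -> 0 <= y k.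
Proof.
 intros H. set (ym := fun j => Rmax 0 (- y j)).
 assert (Hym : forall j, 0 <= ym j) by (intros; apply Rmax_l).
 assert (Hym2 : forall j, - y j <= ym j) by (intros; apply Rmax_r).
 assert (Hr := rho_opt_pos).
 assert (Hk1 : forall k, (k < K)%nat -> rho_opt * ym k <= vtg ym k).
 { intros k Hk. unfold ym at 1. unfold Rmax. destruct (Rle_dec 0 (- y k)).
   - specialize (H k Hk). assert (vtg (fun j => (-1) * y j + 0 * y j) k <= vtg ym k).
     { apply vtg_mono; auto. intros j Hj. specialize (Hym2 j). lra. }
     rewrite vtg_lin in H0. lra.
   - rewrite Rmult_0_r. unfold vtg. apply rsum_nonneg. intros j Hj. apply Rmult_le_pos; auto.
     apply Rmult_le_pos. apply HVnn; auto. left; apply Hgam; auto. }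
 assert (Hs : rsum K (fun j => gam j * z j * ym j) <= 0).
 { rewrite <- pbar_dual_identity. replace 0 with (rsum K (fun _ => 0)) by (apply rsum_zero; auto).
   apply rsum_le. intros k Hk. specialize (Hk1 k Hk). assert (H1 := pbar_pos k Hk).
   assert (0 <= pbar k * (vtg ym k - rho_opt * ym k)) by (apply Rmult_le_pos; lra). lra. }
 intros k Hk. destruct (Rle_or_lt 0 (y k)); auto. exfalso.
 assert (0 < rsum K (fun j => gam j * z j * ym j)).
 { apply rsum_pos. intros j Hj. apply Rmult_le_pos; auto. apply Rmult_le_pos; left; [apply Hgam|apply Hz]; auto.
   exists k. split; auto. apply Rmult_lt_0_compat. apply Rmult_lt_0_compat; [apply Hgam|apply Hz]; auto.
   specialize (Hym2 k). lra. }
 lra.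
Qed.

Lemma Mmatrix_inj_left y : (forall k, (k < K)%nat -> rho_opt * y k - vtg y k = 0) ->
  forall k, (k < K)%nat -> y k = 0.
Proof. intros H k Hk.
 assert (H1 := Mmatrix_nonneg_left y ltac:(intros; rewrite H; auto; lra) k Hk).
 assert (0 <= (-1) * y k + 0 * y k). { apply (Mmatrix_nonneg_left (fun j => (-1) * y j + 0 * y j)); auto. intros j Hj.
   rewrite vtg_lin. specialize (H j Hj). lra. }
 lra. Qed.

Lemma Mmatrix_solve_left b : exists y, forall k, (k < K)%nat -> rho_opt * y k - vtg y k = b k.
Proof.
 assert (Hc := sir_opt_pos).
 assert (Hm : forall y i, (i < K)%nat ->
   mxv K (fun i j => (if Nat.eq_dec i j then 1 else 0) - sir_opt * (V j i * gam j)) y i = sir_opt * (rho_opt * y i - vtg y i)).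
 { intros y i Hi. rewrite mxv_id_minus by auto. unfold mxv, vtg.
   unfold rho_opt. rewrite Rmult_minus_distr_l. rewrite <- Rmult_assoc, Rinv_r by nonzero. rewrite Rmult_1_l.
   rewrite <- rsum_scal. f_equal. apply rsum_ext; intros; ring. }
 destruct (surjective_of_injective K (fun i j => (if Nat.eq_dec i j then 1 else 0) - sir_opt * (V j i * gam j)))
   with (b := fun k => sir_opt * b k) as [y Hy].
 - intros y Hy. apply Mmatrix_inj_left. intros k Hk. specialize (Hy k Hk). rewrite Hm in Hy by auto.
   apply (Rmult_eq_reg_l sir_opt). lra. nonzero.
 - exists y. intros k Hk. specialize (Hy k Hk). rewrite Hm in Hy by auto.
   apply (Rmult_eq_reg_l sir_opt). lra. nonzero.
Qed.

(* [yvec n] solves (rho_opt I - V^T Gamma) y = c_n; for a tight constraint it is the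
   positive left Perron vector of B^(n). *)
Definition yvec : nat -> nat -> R := fun n =>
  proj1_sig (constructive_indefinite_description _ (Mmatrix_solve_left (fun k => C n k))).

Lemma yvec_spec n k : (k < K)%nat -> rho_opt * yvec n k - vtg (yvec n) k = C n k.
Proof. unfold yvec. destruct (constructive_indefinite_description _ _) as [y Hy]. simpl. auto. Qed.

Lemma yvec_nonneg n k : (n < N)%nat -> (k < K)%nat -> 0 <= yvec n k.
Proof. intros Hn. apply Mmatrix_nonneg_left. intros j Hj. rewrite yvec_spec by auto.
 destruct (HC01 n j Hn Hj) as [->| ->]; lra. Qed.

Lemma tight_row_nonzero n : (n < N)%nat -> load n pbar = Ph n -> exists j, (j < K)%nat /\ C n j = 1.
Proof. intros Hn E. apply NNPP. intro Hno. assert (Hp := HPh n Hn).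
 assert (load n pbar = 0). { apply rsum_zero. intros j Hj. destruct (HC01 n j Hn Hj) as [->| E1]. ring.
   exfalso; apply Hno; exists j; auto. }
 lra. Qed.

Lemma yvec_pos n k : (n < N)%nat -> load n pbar = Ph n -> (k < K)%nat -> 0 < yvec n k.
Proof. intros Hn E. apply irreducible_spread_left.
 - intros; apply yvec_nonneg; auto.
 - intros i j Hi Hj HV Hyi. assert (Hs := yvec_spec n j Hj).
   assert (0 <= C n j) by (destruct (HC01 n j Hn Hj) as [->| ->]; lra).
   assert (0 < vtg (yvec n) j).
   { unfold vtg. apply rsum_pos. intros l Hl. apply Rmult_le_pos. apply Rmult_le_pos. apply HVnn; auto. left; apply Hgam; auto.
     apply yvec_nonneg; auto.
     exists i. split; auto. apply Rmult_lt_0_compat; auto. apply Rmult_lt_0_compat. 2: apply Hgam; auto.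
     assert (H0 := HVnn i j Hi Hj). destruct H0; auto. congruence. }
   assert (Hr := rho_opt_pos).
   assert (0 < rho_opt * yvec n j) by lra.
   apply (Rmult_lt_reg_l rho_opt); auto. lra.
 - destruct (tight_row_nonzero n Hn E) as [j [Hj Hc]]. apply NNPP. intro Hall.
   assert (Hy0 : forall l, (l < K)%nat -> yvec n l = 0).
   { intros l Hl. apply NNPP. intro. apply Hall. exists l; auto. }
   assert (Hs := yvec_spec n j Hj). rewrite Hc, Hy0 in Hs by auto.
   assert (vtg (yvec n) j = 0). { apply rsum_zero. intros l Hl. rewrite Hy0 by auto. ring. }
   lra.
Qed.

Definition ydotp n := rsum K (fun k => yvec n k * pbar k).

Lemma ydotp_pos n : (n < N)%nat -> load n pbar = Ph n -> 0 < ydotp n.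
Proof. intros Hn E. apply rsum_pos.
 intros k Hk. apply Rmult_le_pos. apply yvec_nonneg; auto. apply pbar_nonneg; auto.
 exists 0%nat. split. lia. apply Rmult_lt_0_compat. apply yvec_pos; auto; lia. apply pbar_pos; lia. Qed.

Definition xvec n := fun k => pbar k / ydotp n.

Definition perron_pair n r (x y : nat -> R) : Prop :=
  (forall k, (k < K)%nat -> 0 < x k) /\ (forall k, (k < K)%nat -> 0 < y k) /\
  (forall k, (k < K)%nat -> mxv K (Bmat V z gam C Ph n) x k = r * x k) /\
  (forall k, (k < K)%nat -> mxv K (trmx (Bmat V z gam C Ph n)) y k = r * y k) /\
  rsum K (fun k => y k * x k) = 1.

Lemma tight_perron_pair n : (n < N)%nat -> load n pbar = Ph n ->
  perron_pair n rho_opt (xvec n) (yvec n).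
Proof. intros Hn E. assert (Hs := ydotp_pos n Hn E). split; [|split; [|split; [|split]]].
 - intros k Hk. unfold xvec. apply Rdiv_lt_0_compat; auto. apply pbar_pos; auto.
 - intros; apply yvec_pos; auto.
 - intros k Hk. unfold xvec. replace (fun k => pbar k / ydotp n) with (fun k => / ydotp n * pbar k)
     by (apply functional_extensionality; intros; field; nonzero).
   rewrite mxv_scal, B_pbar_eq by auto. field. nonzero.
 - intros k Hk. rewrite mxv_BT.
   assert (rsum K (fun j => gam j * z j * yvec n j) = Ph n).
   { rewrite <- pbar_dual_identity. rewrite <- E. unfold load. apply rsum_ext. intros j Hj. rewrite yvec_spec by auto. ring. }
   rewrite H. assert (Hp := HPh n Hn). assert (H1 := yvec_spec n k Hk).
   replace (C n k * / Ph n * Ph n) with (C n k) by (field; nonzero). lra.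
 - unfold xvec. rewrite (rsum_ext _ _ (fun k => yvec n k * pbar k * / ydotp n)) by (intros; unfold Rdiv; ring).
   rewrite rsum_scal_r. fold (ydotp n). field. nonzero.
Qed.

(* At pbar every argument of psi equals rho_opt, so G(w, pbar) = psi(rho_opt) for every w in
   the simplex. *)
Lemma G_at_pbar phi w : rsum K w = 1 ->
  Gfun K phi V z gam w pbar = psi phi rho_opt.
Proof. intros Hw. unfold Gfun.
 rewrite (rsum_ext _ _ (fun k => w k * psi phi rho_opt)). rewrite rsum_scal_r, Hw. ring.
 intros k Hk. f_equal. f_equal. assert (H := sir_pbar k Hk). assert (Hs := sir_pos pbar k Hk pbar_nonneg (pbar_pos k Hk)).
 assert (Hg := Hgam k Hk). unfold rho_opt. rewrite <- H. field. split; nonzero. Qed.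

Lemma B_ratio_le_inv_sir n p k : (n < N)%nat -> inPplus K N C Ph p -> (k < K)%nat ->
  mxv K (Bmat V z gam C Ph n) p k / p k <= gam k / SIR K V z p k.
Proof.
  intros Hn [Hp Hpp] Hk. rewrite mxv_B.
  assert (Hd := interf_noise_pos p k Hk (proj1 Hp)). assert (Hpk := Hpp k Hk). assert (Hg := Hgam k Hk).
  replace (gam k / SIR K V z p k) with (gam k * (mxv K V p k + z k) / p k)
    by (unfold SIR; field; repeat split; nonzero).
  unfold Rdiv. apply Rmult_le_compat_r; [left; apply Rinv_0_lt_compat; exact Hpk|].
  assert (Hc := proj2 Hp n Hn). fold (load n p) in Hc. assert (HP := HPh n Hn). assert (Hzk := Hz k Hk).
  assert (/ Ph n * (gam k * z k * load n p) <= gam k * z k).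
  { replace (/ Ph n * (gam k * z k * load n p)) with (gam k * z k * (load n p / Ph n)) by (field; nonzero).
    rewrite <- (Rmult_1_r (gam k * z k)) at 2. apply Rmult_le_compat_l; [apply Rmult_le_pos; lra|].
    apply (Rmult_le_reg_r (Ph n)); auto. replace (load n p / Ph n * Ph n) with (load n p) by (field; nonzero). lra. }
  lra.
Qed.

(* Key inequality: for a tight constraint n with Perron pair (x, y), G(y o x, p) >=
   psi(rho_opt) for every p in P_+ (Friedland-Karlin plus Jensen for phi o exp). *)
Lemma G_ge_at_perron_weight phi n x y p : A2 phi -> A3 phi -> (n < N)%nat ->
  perron_pair n rho_opt x y -> inPplus K N C Ph p ->
  psi phi rho_opt <= Gfun K phi V z gam (fun k => y k * x k) p.
Proof.
  intros H2 H3 Hn [Hx [Hy [Ex [Ey Hyx]]]] Hp.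
  assert (Hr := rho_opt_pos).
  set (B := Bmat V z gam C Ph n).
  assert (HB : forall i j, (i < K)%nat -> (j < K)%nat -> 0 <= B i j) by (intros; apply B_nonneg; auto).
  set (s := fun k => ln (SIR K V z p k / gam k)).
  assert (Hsp : forall k, (k < K)%nat -> 0 < SIR K V z p k / gam k).
  { intros k Hk. apply Rdiv_lt_0_compat; [|apply Hgam, Hk].
    apply sir_pos; [exact Hk | exact (proj1 (proj1 Hp)) | exact (proj2 Hp k Hk)]. }
  (* Friedland-Karlin: ln rho_opt <= sum_k y_k x_k ln((Bp)_k/p_k) <= - sum_k y_k x_k s_k *)
  assert (Hsum : rsum K (fun k => y k * x k * s k) <= ln (/ rho_opt)).
  { rewrite ln_Rinv by auto.
    assert (Hfk := friedland_karlin K B x y rho_opt p HB Hx Hy (proj2 Hp) Hr Ex Ey Hyx).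
    assert (rsum K (fun k => y k * x k * s k) <= - rsum K (fun k => y k * x k * ln (mxv K B p k / p k))).
    { rewrite <- rsum_opp. apply rsum_le. intros k Hk. unfold s.
      assert (Hpos := proj1 (log_ratio_row_bound K B x rho_opt p k HB Hx (proj2 Hp) Hr Ex Hk)).
      assert (ln (mxv K B p k / p k) <= - ln (SIR K V z p k / gam k)).
      { rewrite <- ln_Rinv by auto. apply ln_le_pos; [exact Hpos|].
        replace (/ (SIR K V z p k / gam k)) with (gam k / SIR K V z p k).
        - apply B_ratio_le_inv_sir; auto.
        - assert (Hs := sir_pos p k Hk (proj1 (proj1 Hp)) (proj2 Hp k Hk)). assert (Hg := Hgam k Hk).
          field. split; nonzero. }
      assert (0 < y k * x k) by (apply Rmult_lt_0_compat; auto). nra. }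
    lra. }
  (* concavity of phi o exp (from (A3)) turns this into the bound on G *)
  assert (HF := phi_exp_jensen phi H2 H3 K (fun k => y k * x k) s ltac:(lia)
    ltac:(intros k Hk; apply Rmult_lt_0_compat; auto) Hyx).
  assert (HF2 : phi (exp (rsum K (fun k => y k * x k * s k))) <= phi (/ rho_opt)).
  { apply (phi_mono phi H2); [apply exp_pos|].
    rewrite <- (exp_ln (/ rho_opt)) by (apply Rinv_0_lt_compat; auto).
    destruct Hsum as [Hlt|Heq]; [left; apply exp_increasing; auto | rewrite Heq; lra]. }
  unfold Gfun, psi at 2.
  rewrite (rsum_ext _ _ (fun k => - (y k * x k * phi (exp (s k))))).
  - rewrite rsum_opp. unfold psi. lra.
  - intros k Hk. unfold psi, s. rewrite exp_ln by auto.
    assert (H := Hsp k Hk). assert (Hs := sir_pos p k Hk (proj1 (proj1 Hp)) (proj2 Hp k Hk)).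
    assert (Hg := Hgam k Hk).
    replace (/ (gam k / SIR K V z p k)) with (SIR K V z p k / gam k) by (field; split; nonzero).
    ring.
Qed.

Lemma feasible_direction d : (forall n, (n < N)%nat -> load n pbar = Ph n -> load n d <= 0) ->
  exists e, 0 < e /\ forall s, 0 < s <= e -> inPplus K N C Ph (fun j => pbar j + s * d j).
Proof. intros Hd.
 destruct (uniform_small_param K (fun k s => 0 < pbar k + s * d k)) as [e1 [He1 H1]].
 { intros k Hk. assert (Hp := pbar_pos k Hk). assert (HA := Rabs_pos (d k)).
   exists (pbar k / (Rabs (d k) + 1)). split. apply Rdiv_lt_0_compat; lra.
   intros s [Hs1 Hs2]. assert (s * Rabs (d k) < pbar k).
   { apply Rle_lt_trans with (pbar k / (Rabs (d k) + 1) * Rabs (d k)). apply Rmult_le_compat_r; auto.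
     apply (Rmult_lt_reg_r (Rabs (d k) + 1)). lra.
     replace (pbar k / (Rabs (d k) + 1) * Rabs (d k) * (Rabs (d k) + 1)) with (pbar k * Rabs (d k)) by (field; nonzero). nra. }
   assert (- Rabs (d k) <= d k) by (unfold Rabs; destruct (Rcase_abs (d k)); lra). nra. }
 destruct (uniform_small_param N (fun n s => load n (fun j => pbar j + s * d j) <= Ph n)) as [e2 [He2 H2]].
 { intros n Hn.
   assert (E : forall s, load n (fun j => pbar j + s * d j) = load n pbar + s * load n d).
   { intros s. unfold load. rewrite <- rsum_scal, <- rsum_plus. apply rsum_ext; intros; ring. }
   assert (Hle := proj2 HpbarP n Hn). fold (load n pbar) in Hle.
   destruct (Req_dec (load n pbar) (Ph n)) as [Et|Et].
   - exists 1. split. lra. intros s Hs. rewrite E. specialize (Hd n Hn Et). nra.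
   - assert (HA := Rabs_pos (load n d)).
     exists ((Ph n - load n pbar) / (Rabs (load n d) + 1)). split. apply Rdiv_lt_0_compat; lra.
     intros s [Hs1 Hs2]. rewrite E.
     assert (s * Rabs (load n d) < Ph n - load n pbar).
     { apply Rle_lt_trans with ((Ph n - load n pbar) / (Rabs (load n d) + 1) * Rabs (load n d)). apply Rmult_le_compat_r; auto.
       apply (Rmult_lt_reg_r (Rabs (load n d) + 1)). lra.
       replace ((Ph n - load n pbar) / (Rabs (load n d) + 1) * Rabs (load n d) * (Rabs (load n d) + 1))
         with ((Ph n - load n pbar) * Rabs (load n d)) by (field; nonzero). nra. }
     assert (load n d <= Rabs (load n d)) by apply RRle_abs. nra. }
 exists (Rmin e1 e2). split. apply Rmin_glb_lt; auto.
 intros s Hs. assert (Rmin e1 e2 <= e1) by apply Rmin_l. assert (Rmin e1 e2 <= e2) by apply Rmin_r.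
 split; [split|].
 - intros k Hk. left. apply H1; auto; lra.
 - intros n Hn. apply (H2 n Hn s). lra.
 - intros k Hk. apply H1; auto; lra.
Qed.

Definition sir_line (d : nat -> R) k s :=
  (pbar k + s * d k) / (gam k * (mxv K V pbar k + s * mxv K V d k + z k)).

Definition sir_line_slope (d : nat -> R) k :=
  (d k * (rho_opt * pbar k) - gam k * mxv K V d k * pbar k) / (rho_opt * pbar k)².

Lemma sir_line_at_0 d k : (k < K)%nat -> sir_line d k 0 = sir_opt.
Proof.
  intros Hk. unfold sir_line. rewrite (pbar_balanced k Hk) at 1.
  assert (Hd0 := interf_noise_pos pbar k Hk pbar_nonneg). assert (Hg := Hgam k Hk).
  field. split; nonzero.
Qed.

Lemma sir_line_derivative d k : (k < K)%nat -> derivable_pt_lim (sir_line d k) 0 (sir_line_slope d k).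
Proof.
  intros Hk. set (Dk := rho_opt * pbar k).
  assert (HDk : gam k * (mxv K V pbar k + z k) = Dk).
  { unfold Dk, rho_opt. rewrite (pbar_balanced k Hk). assert (Hc := sir_opt_pos). field. nonzero. }
  assert (HDp : 0 < Dk) by (apply Rmult_lt_0_compat; [apply rho_opt_pos | apply pbar_pos, Hk]).
  apply (der_ext (div_fct (fun s => pbar k + s * d k) (fun s => Dk + s * (gam k * mxv K V d k))) _ 0
    ((d k * (Dk + 0 * (gam k * mxv K V d k)) - gam k * mxv K V d k * (pbar k + 0 * d k))
       / (Dk + 0 * (gam k * mxv K V d k))²)).
  - intros s. unfold div_fct, sir_line. rewrite <- HDk. f_equal. ring.
  - unfold sir_line_slope. fold Dk. rewrite !Rmult_0_l, !Rplus_0_r. reflexivity.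
  - apply (derivable_pt_lim_div (fun s => pbar k + s * d k) (fun s => Dk + s * (gam k * mxv K V d k))
             0 (d k) (gam k * mxv K V d k)); [apply der_affine | apply der_affine | nra].
Qed.

Lemma G_along_line phi ws d t : (forall k, (k < K)%nat -> 0 < pbar k + t * d k) ->
  Gfun K phi V z gam ws (fun j => pbar j + t * d j) = rsum K (fun k => ws k * - phi (sir_line d k t)).
Proof.
  intros Ht. unfold Gfun. apply rsum_ext. intros k Hk. f_equal. unfold psi. f_equal. f_equal.
  unfold SIR, sir_line. rewrite mxv_plus, mxv_scal.
  assert (Hd0 := interf_noise_pos (fun j => pbar j + t * d j) k Hk ltac:(intros j Hj; left; apply Ht; auto)).
  rewrite mxv_plus, mxv_scal in Hd0. assert (Hg0 := Hgam k Hk). assert (Ht0 := Ht k Hk).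
  field. repeat split; nonzero.
Qed.

(* The derivative of G(ws, pbar + s d) at 0, expressed through the vector (rho_opt I -
   V^T Gamma)(ws / pbar). *)
Lemma slope_sum_identity ws d (a : R) :
  rsum K (fun k => ws k * - (a * sir_line_slope d k))
  = - (a * / (rho_opt * rho_opt)) *
    dot K (fun j => rho_opt * (ws j / pbar j) - vtg (fun i => ws i / pbar i) j) d.
Proof.
  assert (Hr := rho_opt_pos). unfold dot.
  rewrite (rsum_ext _ _ (fun k => - (a * / (rho_opt * rho_opt)) *
             (rho_opt * (ws k / pbar k) * d k - ws k / pbar k * gam k * mxv K V d k))).
  2: { intros k Hk. unfold sir_line_slope. assert (Hp := pbar_pos k Hk). unfold Rsqr. field. split; nonzero. }
  rewrite rsum_scal. f_equal.
  rewrite (rsum_ext _ (fun k => (rho_opt * (ws k / pbar k) - vtg (fun i => ws i / pbar i) k) * d k)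
    (fun k => rho_opt * (ws k / pbar k) * d k - vtg (fun i => ws i / pbar i) k * d k)) by (intros; ring).
  rewrite !rsum_minus. f_equal. unfold vtg, mxv.
  rewrite (rsum_ext _ (fun k => ws k / pbar k * gam k * rsum K (fun j => V k j * d j))
    (fun k => rsum K (fun j => V k j * gam k * (ws k / pbar k) * d j)))
    by (intros; rewrite <- rsum_scal; apply rsum_ext; intros; ring).
  rewrite rsum_swap. apply rsum_ext. intros j Hj. rewrite <- rsum_scal_r. apply rsum_ext. intros; ring.
Qed.

Lemma first_order_condition phi ws d : A2 phi -> A3 phi ->
  (forall p, inPplus K N C Ph p ->
     Gfun K phi V z gam ws pbar <= Gfun K phi V z gam ws p) ->
  (forall n, (n < N)%nat -> load n pbar = Ph n -> load n d <= 0) ->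
  dot K (fun j => rho_opt * (ws j / pbar j) - vtg (fun i => ws i / pbar i) j) d <= 0.
Proof.
  intros H2 H3 Hmin Hd. destruct (proj1 H2) as [dphi [Hdphi _]].
  apply Rnot_lt_le. intro Hpos.
  assert (Hc := sir_opt_pos). assert (Hr := rho_opt_pos).
  (* g(s) = G(ws, pbar + s d) has derivative D < 0 at s = 0 *)
  set (g := fun s => rsum K (fun k => ws k * - phi (sir_line d k s))).
  set (D := rsum K (fun k => ws k * - (dphi sir_opt * sir_line_slope d k))).
  assert (Hg : derivable_pt_lim g 0 D).
  { apply (der_rsum K (fun k s => ws k * - phi (sir_line d k s))). intros k Hk.
    apply (der_ext (mult_real_fct (ws k) (opp_fct (comp phi (sir_line d k)))) _ 0
             (ws k * - (dphi (sir_line d k 0) * sir_line_slope d k))).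
    - intros s. reflexivity.
    - rewrite sir_line_at_0; auto.
    - apply derivable_pt_lim_scal, derivable_pt_lim_opp, derivable_pt_lim_comp.
      + apply sir_line_derivative, Hk.
      + apply Hdphi. rewrite sir_line_at_0; auto. }
  assert (HDn : D < 0).
  { unfold D. rewrite slope_sum_identity.
    assert (Hdp := phi_deriv_pos phi dphi Hdphi H2 H3 sir_opt Hc).
    assert (0 < dphi sir_opt * / (rho_opt * rho_opt))
      by (apply Rmult_lt_0_compat; auto; apply Rinv_0_lt_compat; nra). nra. }
  (* so a small feasible step along d strictly decreases G(ws, .) below its minimum *)
  destruct (derivative_neg_decrease g D Hg HDn) as [del [Hdel Hdec]].
  destruct (feasible_direction d Hd) as [e [He Hfe]].
  set (s := Rmin (del / 2) e).
  assert (Hs1 : s <= del / 2) by apply Rmin_l. assert (Hs2 : s <= e) by apply Rmin_r.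
  assert (Hs0 : 0 < s) by (apply Rmin_glb_lt; lra).
  assert (Hfs := Hfe s ltac:(lra)).
  assert (E1 : Gfun K phi V z gam ws (fun j => pbar j + s * d j) = g s)
    by exact (G_along_line phi ws d s (proj2 Hfs)).
  assert (E0 : Gfun K phi V z gam ws pbar = g 0).
  { unfold g. rewrite <- G_along_line.
    - apply Gfun_ext_p. intros; ring.
    - intros k Hk. rewrite Rmult_0_l, Rplus_0_r. apply pbar_pos; auto. }
  assert (H1 := Hmin _ Hfs). assert (H4 := Hdec s ltac:(lra)). lra.
Qed.

Lemma spectral_radius_max_eq (rho : nat -> R) n0 :
  (forall n, (n < N)%nat -> is_spectral_radius K (Bmat V z gam C Ph n) (rho n)) ->
  (n0 < N)%nat -> (forall n, (n < N)%nat -> rho n <= rho n0) -> rho n0 = rho_opt.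
Proof.
  intros Hrho Hn0 Hmax.
  destruct tight_constraint_exists as [n1 [Hn1 E1]].
  assert (Htight := spectral_radius_tight n1 (rho n1) Hn1 E1 (Hrho n1 Hn1)).
  assert (Hle := spectral_radius_le_rho_opt n0 (rho n0) Hn0 (Hrho n0 Hn0)).
  assert (H1 := Hmax n1 Hn1). lra.
Qed.

(* sup_w inf_p G(w, p) = psi(rho_opt): pbar bounds every inf from above, and the Perron
   weight of a tight constraint attains the value. *)
Lemma sup_inf_value phi : A2 phi -> A3 phi ->
  sup_inf_eq (inPiplus K) (inPplus K N C Ph) (Gfun K phi V z gam) (psi phi rho_opt).
Proof.
  intros HA2 HA3. split.
  - intros w Hw eps He. exists pbar. split; [exact pbar_in_Pplus|].
    rewrite G_at_pbar by apply Hw. lra.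
  - intros eps He. destruct tight_constraint_exists as [n1 [Hn1 E1]].
    assert (Hpair := tight_perron_pair n1 Hn1 E1).
    exists (fun k => yvec n1 k * xvec n1 k). split.
    + destruct Hpair as [Hx [Hy [_ [_ Hyx]]]].
      split; [intros k Hk; apply Rmult_lt_0_compat; auto | exact Hyx].
    + intros p Hp. assert (H := G_ge_at_perron_weight phi n1 _ _ p HA2 HA3 Hn1 Hpair Hp). lra.
Qed.

(* Every p in P_+ has a link with gamma_k / SIR_k(p) >= rho_opt, since min_k
   SIR_k(p)/gamma_k <= sir_opt. *)
Lemma worst_link_ge_rho_opt p : inPplus K N C Ph p ->
  exists k, (k < K)%nat /\ rho_opt <= gam k / SIR K V z p k.
Proof.
  intros Hp.
  destruct (rmin_attained K (fun k => SIR K V z p k / gam k) ltac:(lia)) as [k [Hk Hrk]].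
  exists k. split; [exact Hk|].
  assert (Hle : SIR K V z p k / gam k <= sir_opt) by (rewrite <- Hrk; exact (Hpbar_max p (proj1 Hp))).
  assert (Hs := sir_pos p k Hk (proj1 (proj1 Hp)) (proj2 Hp k Hk)).
  assert (Hg := Hgam k Hk).
  unfold rho_opt. replace (gam k / SIR K V z p k) with (/ (SIR K V z p k / gam k)) by (field; split; nonzero).
  apply Rinv_le_contravar; auto. apply Rdiv_lt_0_compat; auto.
Qed.

Lemma inf_sup_value phi : A2 phi ->
  inf_sup_eq (inPiplus K) (inPplus K N C Ph) (Gfun K phi V z gam) (psi phi rho_opt).
Proof.
  intros HA2. split.
  - intros p Hp eps He.
    destruct (worst_link_ge_rho_opt p Hp) as [k [Hk Hge]].
    assert (Hps : psi phi rho_opt <= psi phi (gam k / SIR K V z p k)).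
    { destruct Hge as [Hlt|Heq]; [left; apply psi_increasing; auto; apply rho_opt_pos | rewrite Heq; lra]. }
    destruct (simplex_weight_near_vertex K (fun k => psi phi (gam k / SIR K V z p k)) k eps Hk He)
      as [w [Hw Hwt]].
    exists w. split; auto. unfold Gfun. simpl in Hwt. lra.
  - intros eps He. exists pbar. split; [exact pbar_in_Pplus|].
    intros w Hw. rewrite G_at_pbar by apply Hw. lra.
Qed.

Lemma sir_ge_of_G_le phi p : A2 phi -> inPplus K N C Ph p ->
  (forall w, inPiplus K w -> Gfun K phi V z gam w p <= psi phi rho_opt) ->
  forall j, (j < K)%nat -> sir_opt <= SIR K V z p j / gam j.
Proof.
  intros HA2 Hp HG j Hj.
  destruct (Rle_or_lt sir_opt (SIR K V z p j / gam j)) as [H|H]; [exact H|exfalso].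
  assert (Hs := sir_pos p j Hj (proj1 (proj1 Hp)) (proj2 Hp j Hj)).
  assert (Hg := Hgam j Hj). assert (Hc := sir_opt_pos).
  assert (Hgt : rho_opt < gam j / SIR K V z p j).
  { unfold rho_opt. replace (gam j / SIR K V z p j) with (/ (SIR K V z p j / gam j)) by (field; split; nonzero).
    apply Rinv_lt_contravar; auto. apply Rmult_lt_0_compat; auto. apply Rdiv_lt_0_compat; auto. }
  assert (Hpl := psi_increasing phi HA2 _ _ rho_opt_pos Hgt).
  destruct (simplex_weight_near_vertex K (fun k => psi phi (gam k / SIR K V z p k)) j
              (psi phi (gam j / SIR K V z p j) - psi phi rho_opt) Hj ltac:(lra)) as [w [Hw Hwt]].
  assert (H1 := HG w Hw). unfold Gfun in H1. simpl in Hwt. lra.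
Qed.

Lemma saddle_power_is_pbar phi ws ps : A2 phi ->
  saddle_point K N C Ph (Gfun K phi V z gam) ws ps -> forall k, (k < K)%nat -> ps k = pbar k.
Proof.
  intros HA2 [Hws [Hps [Hmw Hmp]]].
  apply pbar_unique; [exact (proj1 Hps)|].
  apply (sir_ge_of_G_le phi ps HA2 Hps). intros w Hw.
  assert (H1 := Hmw w Hw). assert (H2 := Hmp pbar pbar_in_Pplus).
  rewrite G_at_pbar in H2 by apply Hws. lra.
Qed.

(* Via Farkas' lemma, the first-order condition gives Lagrange multipliers beta >= 0
   on the tight constraints: (rho_opt I - V^T Gamma)(ws / pbar) = sum_n beta_n c_n. *)
Lemma first_order_multipliers phi ws : A2 phi -> A3 phi ->
  (forall p, inPplus K N C Ph p -> Gfun K phi V z gam ws pbar <= Gfun K phi V z gam ws p) ->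
  exists beta : nat -> R,
    (forall n, (n < N)%nat -> 0 <= beta n) /\
    (forall n, (n < N)%nat -> ~ inN0 K N C Ph pbar n -> beta n = 0) /\
    forall k, (k < K)%nat ->
      rho_opt * (ws k / pbar k) - vtg (fun i => ws i / pbar i) k = rsum N (fun n => beta n * C n k).
Proof.
  intros HA2 HA3 Hmin.
  set (a := fun n k => if excluded_middle_informative (inN0 K N C Ph pbar n) then C n k else 0).
  set (r := fun k => rho_opt * (ws k / pbar k) - vtg (fun i => ws i / pbar i) k).
  destruct (farkas_lemma K N a r) as [[lam [Hl Hrl]]|[d [Hd Hrd]]].
  - exists (fun n => if excluded_middle_informative (inN0 K N C Ph pbar n) then lam n else 0).
    split; [|split].
    + intros n Hn. destruct (excluded_middle_informative _); [apply Hl; exact Hn | lra].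
    + intros n Hn Hni. destruct (excluded_middle_informative _); [contradiction | reflexivity].
    + intros k Hk. fold (r k). rewrite Hrl by exact Hk. apply rsum_ext. intros n Hn.
      unfold a. destruct (excluded_middle_informative _); ring.
  - exfalso.
    assert (Hdot : dot K r d <= 0).
    { apply (first_order_condition phi ws d HA2 HA3 Hmin). intros n Hn E.
      specialize (Hd n Hn). unfold a in Hd. destruct (excluded_middle_informative _) as [Ht|Ht].
      - exact Hd.
      - exfalso. apply Ht. apply inN0_tight. split; assumption. }
    lra.
Qed.

(* Inverting rho_opt I - V^T Gamma turns the multipliers into the decomposition ws =
   sum_n beta_n (y^T pbar) y^(n) o x^(n). *)
Lemma weight_from_multipliers ws beta :
  (forall n, (n < N)%nat -> ~ inN0 K N C Ph pbar n -> beta n = 0) ->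
  (forall k, (k < K)%nat ->
     rho_opt * (ws k / pbar k) - vtg (fun i => ws i / pbar i) k = rsum N (fun n => beta n * C n k)) ->
  forall k, (k < K)%nat -> ws k = rsum N (fun n => beta n * ydotp n * (yvec n k * xvec n k)).
Proof.
  intros Hbeta Hr.
  set (u := fun i => ws i / pbar i).
  assert (Hu : forall k, (k < K)%nat -> u k - rsum N (fun n => beta n * yvec n k) = 0).
  { apply (Mmatrix_inj_left (fun k => u k - rsum N (fun n => beta n * yvec n k))). intros k Hk.
    replace (fun k => u k - rsum N (fun n => beta n * yvec n k))
      with (fun k => 1 * u k + (-1) * rsum N (fun n => beta n * yvec n k))
      by (apply functional_extensionality; intros; ring).
    rewrite vtg_lin, vtg_rsum.
    assert (E := Hr k Hk). change (rho_opt * u k - vtg u k = rsum N (fun n => beta n * C n k)) in E.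
    assert (E2 : rsum N (fun n => beta n * C n k)
                 = rho_opt * rsum N (fun n => beta n * yvec n k) - rsum N (fun n => beta n * vtg (yvec n) k)).
    { rewrite <- rsum_scal, <- rsum_minus. apply rsum_ext. intros n Hn.
      rewrite <- (yvec_spec n k Hk). ring. }
    lra. }
  intros k Hk. assert (Hp := pbar_pos k Hk). specialize (Hu k Hk).
  replace (ws k) with (pbar k * u k) by (unfold u; field; nonzero).
  replace (u k) with (rsum N (fun n => beta n * yvec n k)) by lra.
  rewrite <- rsum_scal. apply rsum_ext. intros n Hn. unfold xvec.
  destruct (classic (inN0 K N C Ph pbar n)) as [Ht|Ht]; [|rewrite Hbeta by assumption; ring].
  apply inN0_tight in Ht. assert (H := ydotp_pos n (proj1 Ht) (proj2 Ht)). field. nonzero.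
Qed.

(* The set W of the theorem: ws is a convex combination, supported on N_0(pbar), of
   Perron weights y^(n) o x^(n) of the matrices B^(n) for the eigenvalues r n. *)
Definition perron_mixture (r : nat -> R) (ws : nat -> R) : Prop :=
  exists (c : nat -> R) (x y : nat -> nat -> R),
    (forall n, (n < N)%nat -> 0 <= c n) /\
    (forall n, (n < N)%nat -> ~ inN0 K N C Ph pbar n -> c n = 0) /\
    rsum N c = 1 /\
    (forall n, inN0 K N C Ph pbar n -> perron_pair n (r n) (x n) (y n)) /\
    (forall k, (k < K)%nat -> ws k = rsum N (fun n => c n * (y n k * x n k))).

Lemma saddle_point_necessary phi ws ps : A2 phi -> A3 phi ->
  saddle_point K N C Ph (Gfun K phi V z gam) ws ps ->
  (forall k, (k < K)%nat -> ps k = pbar k) /\ perron_mixture (fun _ => rho_opt) ws.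
Proof.
  intros HA2 HA3 Hsaddle.
  assert (Hpe := saddle_power_is_pbar phi ws ps HA2 Hsaddle).
  destruct Hsaddle as [Hws [_ [_ Hmp]]].
  split; [exact Hpe|].
  assert (Hmin : forall p, inPplus K N C Ph p -> Gfun K phi V z gam ws pbar <= Gfun K phi V z gam ws p).
  { intros p Hp. rewrite <- (Gfun_ext_p K phi V z gam ws ps pbar Hpe). apply Hmp, Hp. }
  destruct (first_order_multipliers phi ws HA2 HA3 Hmin) as [beta [Hb0 [Hbt Hr]]].
  assert (Hwk := weight_from_multipliers ws beta Hbt Hr).
  exists (fun n => beta n * ydotp n), xvec, yvec. split; [|split; [|split; [|split]]].
  - intros n Hn. destruct (classic (inN0 K N C Ph pbar n)) as [Ht|Ht].
    + apply inN0_tight in Ht. apply Rmult_le_pos; [apply Hb0, Hn | left; apply ydotp_pos; apply Ht].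
    + rewrite Hbt by assumption. lra.
  - intros n Hn Ht. rewrite Hbt by assumption. ring.
  - destruct Hws as [_ Hws1]. rewrite (rsum_ext _ _ _ Hwk), rsum_swap in Hws1.
    rewrite <- Hws1. apply rsum_ext. intros n Hn. rewrite rsum_scal.
    destruct (classic (inN0 K N C Ph pbar n)) as [Ht|Ht]; [|rewrite Hbt by assumption; ring].
    apply inN0_tight in Ht. destruct (tight_perron_pair n (proj1 Ht) (proj2 Ht)) as [_ [_ [_ [_ E]]]].
    rewrite E. ring.
  - intros n Ht. apply inN0_tight in Ht. exact (tight_perron_pair n (proj1 Ht) (proj2 Ht)).
  - exact Hwk.
Qed.

Lemma perron_mixture_in_simplex r ws : perron_mixture r ws -> inPiplus K ws.
Proof.
  intros [c [x [y [Hc0 [Hcz [Hc1 [Hxy Hws]]]]]]].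
  assert (Hterm : forall n k, (n < N)%nat -> (k < K)%nat -> 0 <= c n * (y n k * x n k)).
  { intros n k Hn Hk. destruct (classic (inN0 K N C Ph pbar n)) as [Hi|Hi].
    - destruct (Hxy n Hi) as [Hx [Hy _]]. apply Rmult_le_pos; [auto|]. apply Rmult_le_pos; left; auto.
    - rewrite Hcz by assumption. lra. }
  split.
  - intros k Hk. rewrite Hws by exact Hk.
    destruct (rsum_nonzero_term N c ltac:(lra)) as [n [Hn Hcn]].
    apply rsum_pos; [intros; apply Hterm; auto|]. exists n. split; [exact Hn|].
    destruct (classic (inN0 K N C Ph pbar n)) as [Hi|Hi]; [|contradiction (Hcn (Hcz n Hn Hi))].
    destruct (Hxy n Hi) as [Hx [Hy _]]. assert (H := Hc0 n Hn).
    apply Rmult_lt_0_compat; [lra|]. apply Rmult_lt_0_compat; auto.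
  - rewrite (rsum_ext _ _ _ Hws), rsum_swap, <- Hc1. apply rsum_ext. intros n Hn.
    rewrite rsum_scal. destruct (classic (inN0 K N C Ph pbar n)) as [Hi|Hi].
    + destruct (Hxy n Hi) as [_ [_ [_ [_ E]]]]. rewrite E. ring.
    + rewrite Hcz by assumption. ring.
Qed.

(* By linearity in w, the key inequality extends to all of W. *)
Lemma G_ge_on_perron_mixture phi ws : A2 phi -> A3 phi -> perron_mixture (fun _ => rho_opt) ws ->
  forall p, inPplus K N C Ph p -> psi phi rho_opt <= Gfun K phi V z gam ws p.
Proof.
  intros HA2 HA3 [c [x [y [Hc0 [Hcz [Hc1 [Hxy Hws]]]]]]] p Hp.
  rewrite (Gfun_ext_w K phi V z gam ws (fun k => rsum N (fun n => c n * (y n k * x n k))) p Hws), Gfun_mix.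
  rewrite <- (Rmult_1_l (psi phi rho_opt)), <- Hc1, <- rsum_scal_r.
  apply rsum_le. intros n Hn. destruct (classic (inN0 K N C Ph pbar n)) as [Hi|Hi].
  - apply Rmult_le_compat_l; [apply Hc0, Hn|].
    exact (G_ge_at_perron_weight phi n (x n) (y n) p HA2 HA3 Hn (Hxy n Hi) Hp).
  - rewrite Hcz by assumption. lra.
Qed.

Lemma saddle_point_sufficient phi ws ps : A2 phi -> A3 phi ->
  (forall k, (k < K)%nat -> ps k = pbar k) -> perron_mixture (fun _ => rho_opt) ws ->
  saddle_point K N C Ph (Gfun K phi V z gam) ws ps.
Proof.
  intros HA2 HA3 Hpe Hmix.
  assert (Hws := perron_mixture_in_simplex _ ws Hmix).
  assert (HGps : forall w, rsum K w = 1 -> Gfun K phi V z gam w ps = psi phi rho_opt).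
  { intros w Hw. rewrite (Gfun_ext_p K phi V z gam w ps pbar Hpe). apply G_at_pbar, Hw. }
  split; [exact Hws | split; [|split]].
  - apply (inPplus_ext K N C Ph pbar ps); [intros; symmetry; auto | exact pbar_in_Pplus].
  - intros w Hw. rewrite !HGps by (apply Hw || apply Hws). lra.
  - intros p Hp. rewrite HGps by apply Hws. exact (G_ge_on_perron_mixture phi ws HA2 HA3 Hmix p Hp).
Qed.

Lemma saddle_point_iff phi ws ps : A2 phi -> A3 phi ->
  saddle_point K N C Ph (Gfun K phi V z gam) ws ps <->
  (forall k, (k < K)%nat -> ps k = pbar k) /\ perron_mixture (fun _ => rho_opt) ws.
Proof.
  intros HA2 HA3. split.
  - exact (saddle_point_necessary phi ws ps HA2 HA3).
  - intros [Hpe Hmix]. exact (saddle_point_sufficient phi ws ps HA2 HA3 Hpe Hmix).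
Qed.

(* On N_0(pbar) the spectral radii rho(B^(n)) all equal rho_opt, so W may be described
   with either. *)
Lemma perron_mixture_spectral_radius (rho : nat -> R) ws :
  (forall n, (n < N)%nat -> is_spectral_radius K (Bmat V z gam C Ph n) (rho n)) ->
  perron_mixture rho ws <-> perron_mixture (fun _ => rho_opt) ws.
Proof.
  intros Hrho.
  assert (E : forall n, inN0 K N C Ph pbar n -> rho n = rho_opt).
  { intros n Hn. apply inN0_tight in Hn. destruct Hn as [Hn Et].
    exact (spectral_radius_tight n (rho n) Hn Et (Hrho n Hn)). }
  split; intros [c [x [y [Hc0 [Hcz [Hc1 [Hxy Hws]]]]]]];
    exists c, x, y; (split; [exact Hc0|]); (split; [exact Hcz|]); (split; [exact Hc1|]);
    (split; [|exact Hws]); intros m Hm.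
  - rewrite <- (E m Hm). apply Hxy, Hm.
  - rewrite (E m Hm). apply Hxy, Hm.
Qed.

End Network.

Theorem theorem5
  (K N : nat) (HK : (2 <= K)%nat)
  (C : nat -> nat -> R)
  (HC01 : forall n k, (n < N)%nat -> (k < K)%nat -> C n k = 0 \/ C n k = 1)
  (HCcol : forall k, (k < K)%nat -> exists n, (n < N)%nat /\ C n k = 1)
  (Ph : nat -> R) (HPh : forall n, (n < N)%nat -> 0 < Ph n)
  (V : nat -> nat -> R)
  (HVnn : forall i j, (i < K)%nat -> (j < K)%nat -> 0 <= V i j)
  (HVdiag : forall k, (k < K)%nat -> V k k = 0)
  (HVirr : irreducible K V)
  (z : nat -> R) (Hz : forall k, (k < K)%nat -> 0 < z k)
  (gam : nat -> R) (Hgam : forall k, (k < K)%nat -> 0 < gam k)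
  (phi : R -> R) (HA2 : A2 phi) (HA3 : A3 phi)
  (rho : nat -> R)
  (Hrho : forall n, (n < N)%nat -> is_spectral_radius K (Bmat V z gam C Ph n) (rho n))
  (pbar : nat -> R)
  (Hpbar : inP K N C Ph pbar /\
           forall q, inP K N C Ph q ->
             rmin K (fun k => SIR K V z q k / gam k)
               <= rmin K (fun k => SIR K V z pbar k / gam k))
  (n0 : nat) (Hn0 : (n0 < N)%nat)
  (Hn0max : forall n, (n < N)%nat -> rho n <= rho n0) :
  sup_inf_eq (inPiplus K) (inPplus K N C Ph) (Gfun K phi V z gam) (psi phi (rho n0)) /\
  inf_sup_eq (inPiplus K) (inPplus K N C Ph) (Gfun K phi V z gam) (psi phi (rho n0)) /\
  (forall ws ps : nat -> R,
     saddle_point K N C Ph (Gfun K phi V z gam) ws ps <->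
     ((forall k, (k < K)%nat -> ps k = pbar k) /\
      exists (c : nat -> R) (x y : nat -> nat -> R),
        (forall n, (n < N)%nat -> 0 <= c n) /\
        (forall n, (n < N)%nat -> ~ inN0 K N C Ph pbar n -> c n = 0) /\
        rsum N c = 1 /\
        (forall n, inN0 K N C Ph pbar n ->
           (forall k, (k < K)%nat -> 0 < x n k) /\
           (forall k, (k < K)%nat -> 0 < y n k) /\
           (forall k, (k < K)%nat -> mxv K (Bmat V z gam C Ph n) (x n) k = rho n * x n k) /\
           (forall k, (k < K)%nat ->
              mxv K (trmx (Bmat V z gam C Ph n)) (y n) k = rho n * y n k) /\
           rsum K (fun k => y n k * x n k) = 1) /\
        (forall k, (k < K)%nat ->
           ws k = rsum N (fun n => c n * (y n k * x n k))))).
Proof.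
  destruct Hpbar as [HpbarP Hpbar_max].
  rewrite (spectral_radius_max_eq K N C Ph V z gam pbar HK HC01 HPh HVnn HVirr Hz Hgam
             HpbarP Hpbar_max rho n0 Hrho Hn0 Hn0max).
  split; [|split].
  - exact (sup_inf_value K N C Ph V z gam pbar HK HC01 HPh HVnn HVirr Hz Hgam
             HpbarP Hpbar_max phi HA2 HA3).
  - exact (inf_sup_value K N C Ph V z gam pbar HK HC01 HPh HVnn HVirr Hz Hgam
             HpbarP Hpbar_max phi HA2).
  - intros ws ps.
    rewrite (saddle_point_iff K N C Ph V z gam pbar HK HC01 HPh HVnn HVirr Hz Hgam
               HpbarP Hpbar_max phi ws ps HA2 HA3).
    (* the second conjunct of the goal is [perron_mixture rho ws], unfolded *)
    apply and_iff_compat_l. symmetry.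
    exact (perron_mixture_spectral_radius K N C Ph V z gam pbar HK HC01 HPh HVnn HVirr Hz Hgam
             HpbarP Hpbar_max rho ws Hrho).
Qed.
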